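(* Let $(\mathbb{T}_n)$ be the sequence of dyadic partitions and let $\alpha>0$ be irrational and fixed. (a) If $\bm f\in\mathscr{F}$, then $y_\alpha^{\bm f}$ admits the linear quadratic variation $\langle y_\alpha^{\bm f}\rangle_t=t\int_0^1f_\infty^2(s)\,ds$ for $t\in[0,1]$. (b) If $\bm f,\bm g\in\mathscr{F}$, then $y_\alpha^{\bm f}$ and $y_\alpha^{\bm g}$ admit the linear covariation $\langle y_\alpha^{\bm f},y_\alpha^{\bm g}\rangle_t=t\int_0^1f_\infty(s)g_\infty(s)\,ds$ for $t\in[0,1]$. In particular, $\{y_\alpha^{\bm f}:\bm f\in\mathscr{F}\}$ is a vector space of functions admitting a linear quadratic variation.
   Context: Dyadic partitions: $\mathbb{T}_n=\{k2^{-n}:k=0,\dots,2^n\}$. For $s\in\mathbb{T}_n$, $s'$ is the successor of $s$ in $\mathbb{T}_n$ ($s'=1$ if $s=1$). For $x,y\in C[0,1]$, $\langle x,y\rangle^n_t:=\sum_{s\in\mathbb{T}_n,\,s\le t}(x(s')-x(s))(y(s')-y(s))$; the covariation is $\langle x,y\rangle_t=\lim_n\langle x,y\rangle^n_t$ and the quadratic variation $\langle x\rangle_t=\langle x,x\rangle_t$, whenever the limits exist. Faber--Schauder functions: $e_{0,0}(t)=\max\{0,\min\{t,1-t\}\}$, $e_{n,k}(t)=2^{-n/2}e_{0,0}(2^nt-k)$ for $n\ge1$, $k=0,\dots,2^n-1$. $\mathscr{F}$ is the class of sequences $\bm f=(f_n)_{n\ge0}$ of bounded functions $f_n:[0,1]\to\mathbb{R}$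 converging uniformly to a Riemann integrable function $f_\infty$. For $t\ge0$, $t \bmod 1:=t-\lfloor t\rfloor$. For $\bm f\in\mathscr{F}$ and $\alpha>0$, $\vartheta_{n,k}(\alpha,\bm f):=f_n(\alpha k\bmod 1)$ and $y_\alpha^{\bm f}:=\sum_{n=0}^\infty\sum_{k=0}^{2^n-1}\vartheta_{n,k}(\alpha,\bm f)e_{n,k}$. *)

From Stdlib Require Import Reals Lra Lia.
From Coquelicot Require Import Coquelicot.
Open Scope R_scope.

(* t mod 1 := t - floor t  (Int_part is the floor on R) *)
Definition mod1 (t : R) : R := t - IZR (Int_part t).

Definition e00 (t : R) : R := Rmax 0 (Rmin t (1 - t)).
Definition ef (n k : nat) (t : R) : R := / sqrt (2 ^ n) * e00 (2 ^ n * t - INR k).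

Definition theta (alpha : R) (f : nat -> R -> R) (n k : nat) : R :=
  f n (mod1 (alpha * INR k)).

Definition y (alpha : R) (f : nat -> R -> R) (t : R) : R :=
  Series (fun n => sum_n (fun k => theta alpha f n k * ef n k t) (2 ^ n - 1)%nat).

(* successor of s = k 2^{-n} in T_n (s' = 1 if s = 1) *)
Definition dyad (n k : nat) : R := INR k / 2 ^ n.
Definition dsucc (n k : nat) : R := Rmin (INR (S k) / 2 ^ n) 1.

Definition covn (n : nat) (x z : R -> R) (t : R) : R :=
  sum_n (fun k => if Rle_dec (dyad n k) t
                  then (x (dsucc n k) - x (dyad n k)) * (z (dsucc n k) - z (dyad n k))
                  else 0) (2 ^ n)%nat.

Definition inF (f : nat -> R -> R) (finf : R -> R) : Prop :=
  (forall n, exists M, forall x, 0 <= x <= 1 -> Rabs (f n x) <= M) /\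
  (forall eps, 0 < eps -> exists N, forall n x, (N <= n)%nat -> 0 <= x <= 1 ->
       Rabs (f n x - finf x) < eps) /\
  ex_RInt finf 0 1.

Definition irrational (a : R) : Prop :=
  ~ exists p q : Z, q <> 0%Z /\ a = IZR p / IZR q.

From Stdlib Require Import Reals Lra Lia ZArith Classical ClassicalEpsilon.
From Coquelicot Require Import Coquelicot.
Open Scope R_scope.

(* On the dyadic grid of mesh [2^-(m+1)] only the Schauder levels [n <= m]
   matter, and level [m] adds [+- theta_(m,i) 2^(-m/2) / 2] to the two halves of
   the [i]-th increment on the grid [T_m].  Hence the sum [E_m] of products of
   increments up to [t] satisfies [E_(m+1) ~ E_m / 2 + 2^-(m+1) sum_(i < 2^m t)
   f_m(i alpha mod 1) g_m(i alpha mod 1)], up to one boundary increment of size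
   [O(2^-m)].  By Weyl equidistribution of [i alpha mod 1] (a consequence of
   Dirichlet's approximation theorem) and uniform convergence [f_m -> f_inf],
   the forcing term tends to [t/2 int f_inf g_inf], and the contraction
   [x_(m+1) = x_m / 2 + b_m] transfers this limit to [E_m]. *)

Fixpoint rsum (F : nat -> R) (n : nat) : R :=
  match n with O => 0 | S n' => rsum F n' + F n' end.

Lemma rsum_ext F G n : (forall i, (i < n)%nat -> F i = G i) -> rsum F n = rsum G n.
Proof.
  induction n as [|n IH]; intros H; simpl; [reflexivity|].
  rewrite IH, H; auto; intros; apply H; lia.
Qed.

Lemma rsum_add F G n : rsum (fun i => F i + G i) n = rsum F n + rsum G n.
Proof. induction n; simpl; lra. Qed.

Lemma rsum_scal c F n : rsum (fun i => c * F i) n = c * rsum F n.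
Proof. induction n; simpl; lra. Qed.

Lemma rsum_opp F n : rsum (fun i => - F i) n = - rsum F n.
Proof. induction n; simpl; lra. Qed.

Lemma rsum_const c n : rsum (fun _ => c) n = INR n * c.
Proof. induction n as [|n IH]; simpl rsum; [simpl; lra|]. rewrite IH, S_INR; lra. Qed.

Lemma rsum_le F G n : (forall i, (i < n)%nat -> F i <= G i) -> rsum F n <= rsum G n.
Proof.
  induction n as [|n IH]; intros H; simpl; [lra|].
  apply Rplus_le_compat; [apply IH; intros; apply H|apply H]; lia.
Qed.

Lemma rsum_ge0 F n : (forall i, (i < n)%nat -> 0 <= F i) -> 0 <= rsum F n.
Proof. intros H. rewrite <- (Rmult_0_r (INR n)), <- rsum_const. now apply rsum_le. Qed.

Lemma rsum_abs F n : Rabs (rsum F n) <= rsum (fun i => Rabs (F i)) n.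
Proof.
  induction n; simpl; [rewrite Rabs_R0; lra|].
  eapply Rle_trans; [apply Rabs_triang|lra].
Qed.

Lemma rsum_Sl F n : rsum F (S n) = F O + rsum (fun i => F (S i)) n.
Proof. induction n as [|n IH]; simpl in *; [lra|]. rewrite IH; lra. Qed.

Lemma rsum_cat F n m : rsum F (n + m) = rsum F n + rsum (fun i => F (n + i)%nat) m.
Proof.
  induction m as [|m IH]; simpl; [rewrite Nat.add_0_r; lra|].
  rewrite Nat.add_succ_r; simpl; rewrite IH; lra.
Qed.

Lemma rsum_exchange (G : nat -> nat -> R) N K :
  rsum (fun i => rsum (G i) K) N = rsum (fun c => rsum (fun i => G i c) N) K.
Proof.
  induction N as [|N IH]; simpl.
  - induction K; simpl; lra.
  - rewrite IH, <- rsum_add; reflexivity.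
Qed.

Lemma rsum_pairs F n : rsum F (2 * n) = rsum (fun i => F (2 * i)%nat + F (S (2 * i))) n.
Proof.
  induction n as [|n IH]; [simpl; lra|].
  replace (2 * S n)%nat with (S (S (2 * n))) by lia.
  change (rsum F (2 * n) + F (2 * n)%nat + F (S (2 * n)) =
          rsum (fun i => F (2 * i)%nat + F (S (2 * i))) n + (F (2 * n)%nat + F (S (2 * n)))).
  rewrite IH; lra.
Qed.

Lemma rsum_delta (v : R) i n : (i < n)%nat ->
  rsum (fun k => if Nat.eq_dec k i then v else 0) n = v.
Proof.
  induction n as [|n IH]; intros H; [lia|]; simpl.
  destruct (Nat.eq_dec n i) as [->|Hn]; [|rewrite IH; [lra|lia]].
  rewrite (rsum_ext _ (fun _ => 0)), rsum_const; [lra|].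
  intros k Hk; destruct (Nat.eq_dec k i); [lia|auto].
Qed.

Lemma rsum_drift (F : nat -> R) v q k : 0 <= q ->
  (forall j, Rabs (F j - v) <= INR j * q) ->
  Rabs (rsum F k - INR k * v) <= INR k * INR k * q.
Proof.
  intros Hq Hj; induction k as [|k IH]; [simpl; rewrite Rmult_0_l, Rminus_0_r, Rabs_R0; lra|].
  simpl rsum; rewrite S_INR; specialize (Hj k).
  apply Rabs_le_between' in Hj; apply Rabs_le_between' in IH.
  pose proof (pos_INR k); assert (0 <= INR k * q) by nra; apply Rabs_le; nra.
Qed.

Lemma sum_n_rsum (F : nat -> R) n : sum_n F n = rsum F (S n).
Proof.
  induction n as [|n IH]; [rewrite sum_O; simpl; lra|].
  rewrite sum_Sn, IH; reflexivity.
Qed.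

(** * The Faber--Schauder system at dyadic points *)

Lemma pow2_gt0 n : 0 < 2 ^ n.
Proof. apply pow_lt; lra. Qed.

Lemma pow2_nat_ge1 n : (1 <= 2 ^ n)%nat.
Proof. induction n; simpl; lia. Qed.

Lemma INR_pow2 n : INR (2 ^ n) = 2 ^ n.
Proof. rewrite pow_INR; simpl INR; f_equal; lra. Qed.

Lemma e00_out z : z <= 0 \/ 1 <= z -> e00 z = 0.
Proof. unfold e00, Rmax, Rmin; intros H; repeat destruct Rle_dec; lra. Qed.

Lemma e00_left z : 0 <= z <= /2 -> e00 z = z.
Proof. unfold e00, Rmax, Rmin; intros H; repeat destruct Rle_dec; lra. Qed.

Lemma e00_right z : /2 <= z <= 1 -> e00 z = 1 - z.
Proof. unfold e00, Rmax, Rmin; intros H; repeat destruct Rle_dec; lra. Qed.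

Lemma e00_ge0 z : 0 <= e00 z.
Proof. unfold e00, Rmax, Rmin; repeat destruct Rle_dec; lra. Qed.

Lemma e00_nat_sub a b : e00 (INR a - INR b) = 0.
Proof.
  apply e00_out; destruct (le_lt_dec a b) as [H|H]; apply le_INR in H;
    [left|right; rewrite S_INR in H]; lra.
Qed.

Lemma ef_dyadic n m k j : (m <= n)%nat -> ef n k (INR j / 2 ^ m) = 0.
Proof.
  intros H; unfold ef.
  replace (2 ^ n * (INR j / 2 ^ m)) with (INR (2 ^ (n - m) * j)).
  - rewrite e00_nat_sub; lra.
  - replace n with ((n - m) + m)%nat at 2 by lia.
    rewrite mult_INR, INR_pow2, pow_add; field; apply Rgt_not_eq, pow2_gt0.
Qed.

(* The case hypothesis says that [[w, w + 1]] lies in one of the pieces on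
   which [x => e00 (x / H)] is affine. *)
Lemma e00_midpoint (w H : R) : 2 <= H ->
  (w + 1 <= 0 \/ (0 <= w /\ w + 1 <= H / 2) \/ (H / 2 <= w /\ w + 1 <= H) \/ H <= w) ->
  e00 ((w + /2) / H) = (e00 (w / H) + e00 ((w + 1) / H)) / 2.
Proof.
  intros HH C; unfold Rdiv; set (u := / H).
  assert (Hu : 0 < u) by (apply Rinv_0_lt_compat; lra).
  assert (Hu1 : H * u = 1) by (unfold u; field; lra).
  destruct C as [C|[C|[C|C]]].
  - rewrite !e00_out; try lra; left; nra.
  - rewrite !e00_left; try lra; split; nra.
  - rewrite !e00_right; try lra; split; nra.
  - rewrite !e00_out; try lra; right; nra.
Qed.

Lemma ef_midpoint_coarse n m k i : (n < m)%nat ->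
  ef n k (INR (S (2 * i)) / 2 ^ S m) =
  (ef n k (INR i / 2 ^ m) + ef n k (INR (S i) / 2 ^ m)) / 2.
Proof.
  intros Hnm; unfold ef.
  set (r := (m - n)%nat); assert (Hm : m = (n + r)%nat) by (unfold r; lia).
  assert (Hr : (1 <= r)%nat) by (unfold r; lia); clearbody r; subst m.
  set (h := (2 ^ (r - 1))%nat).
  assert (H2 : (2 ^ r = 2 * h)%nat)
    by (unfold h; destruct r; [lia|]; simpl; rewrite Nat.sub_0_r; lia).
  assert (Hh1 : 1 <= INR h) by (apply (le_INR 1), pow2_nat_ge1).
  set (H := 2 ^ r).
  assert (HH : H = 2 * INR h) by (unfold H; rewrite <- INR_pow2, H2, mult_INR; simpl; lra).
  set (w := INR i - INR k * H).
  assert (E0 : 2 ^ n * (INR i / 2 ^ (n + r)) - INR k = w / H)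
    by (unfold w, H; rewrite pow_add; field; split; apply Rgt_not_eq, pow2_gt0).
  assert (E1 : 2 ^ n * (INR (S (2 * i)) / 2 ^ S (n + r)) - INR k = (w + /2) / H)
    by (unfold w, H; rewrite S_INR, mult_INR; simpl pow; rewrite pow_add; simpl INR;
        field; split; apply Rgt_not_eq, pow2_gt0).
  assert (E2 : 2 ^ n * (INR (S i) / 2 ^ (n + r)) - INR k = (w + 1) / H)
    by (unfold w, H; rewrite S_INR, pow_add; field; split; apply Rgt_not_eq, pow2_gt0).
  rewrite E0, E1, E2, e00_midpoint; [field; apply Rgt_not_eq, sqrt_lt_R0, pow2_gt0|lra|].
  set (kH := (k * (2 * h))%nat).
  assert (EkH : INR kH = INR k * H) by (unfold kH; rewrite mult_INR, HH, mult_INR; simpl; lra).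
  unfold w; rewrite <- EkH.
  assert (C : (i + 1 <= kH \/ (kH <= i /\ i + 1 <= kH + h) \/
              (kH + h <= i /\ i + 1 <= kH + (h + h)) \/ kH + (h + h) <= i)%nat) by lia.
  destruct C as [C|[[C1 C2]|[[C1 C2]|C]]];
    repeat match goal with Hc : (_ <= _)%nat |- _ => apply le_INR in Hc end;
    rewrite ?plus_INR in *; simpl INR in *; lra.
Qed.

Lemma ef_midpoint_fine m k i :
  ef m k (INR (S (2 * i)) / 2 ^ S m) = if Nat.eq_dec k i then / sqrt (2 ^ m) * / 2 else 0.
Proof.
  unfold ef.
  replace (2 ^ m * (INR (S (2 * i)) / 2 ^ S m) - INR k) with (INR i - INR k + /2)
    by (rewrite S_INR, mult_INR; simpl pow; simpl INR; field; apply Rgt_not_eq, pow2_gt0).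
  destruct (Nat.eq_dec k i) as [->|Hki]; [rewrite e00_left; lra|].
  rewrite e00_out; [lra|].
  destruct (le_lt_dec k i) as [L|L]; [right|left];
    [assert (L' : (S k <= i)%nat) by lia; apply le_INR in L'|apply le_INR in L];
    rewrite S_INR in *; lra.
Qed.

(** * Increments of [y] on dyadic grids *)

Definition level alpha f n t : R :=
  sum_n (fun k => theta alpha f n k * ef n k t) (2 ^ n - 1).

Lemma level_rsum alpha f n t :
  level alpha f n t = rsum (fun k => theta alpha f n k * ef n k t) (2 ^ n).
Proof. unfold level; rewrite sum_n_rsum; f_equal; pose proof (pow2_nat_ge1 n); lia. Qed.

Lemma y_dyadic alpha f m j :
  y alpha f (INR j / 2 ^ m) = rsum (fun n => level alpha f n (INR j / 2 ^ m)) m.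
Proof.
  unfold y, Series.
  change (fun n => sum_n (fun k => theta alpha f n k * ef n k (INR j / 2 ^ m)) (2 ^ n - 1))
    with (fun n => level alpha f n (INR j / 2 ^ m)).
  rewrite (Lim_seq_ext_loc _ (fun _ => rsum (fun n => level alpha f n (INR j / 2 ^ m)) m)),
    Lim_seq_const; [reflexivity|].
  exists m; intros N HN; rewrite sum_n_rsum.
  replace (S N) with (m + (S N - m))%nat by lia.
  rewrite rsum_cat, (rsum_ext (fun i => level alpha f (m + i) _) (fun _ => 0)), rsum_const;
    [lra|].
  intros i _; rewrite level_rsum, (rsum_ext _ (fun _ => 0)), rsum_const; [lra|].
  intros k _; rewrite ef_dyadic; [lra|lia].
Qed.

Lemma level_midpoint_coarse alpha f n m i : (n < m)%nat ->
  level alpha f n (INR (S (2 * i)) / 2 ^ S m) =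
  (level alpha f n (INR i / 2 ^ m) + level alpha f n (INR (S i) / 2 ^ m)) / 2.
Proof.
  intros H; rewrite !level_rsum.
  rewrite (rsum_ext _ (fun k => / 2 * (theta alpha f n k * ef n k (INR i / 2 ^ m)) +
                               / 2 * (theta alpha f n k * ef n k (INR (S i) / 2 ^ m)))),
    rsum_add, !rsum_scal; [lra|].
  intros k _; rewrite ef_midpoint_coarse; [lra|auto].
Qed.

Definition peak m := / sqrt (2 ^ m) * / 2.

Lemma level_midpoint_fine alpha f m i : (i < 2 ^ m)%nat ->
  level alpha f m (INR (S (2 * i)) / 2 ^ S m) = theta alpha f m i * peak m.
Proof.
  intros H; rewrite level_rsum.
  rewrite (rsum_ext _ (fun k => if Nat.eq_dec k i then theta alpha f m i * peak m else 0));
    [now apply rsum_delta|].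
  intros k _; rewrite ef_midpoint_fine; unfold peak.
  destruct (Nat.eq_dec k i) as [->|]; lra.
Qed.

Definition ydyad alpha f m j := y alpha f (INR j / 2 ^ m).

Lemma ydyad_double alpha f m j : ydyad alpha f (S m) (2 * j) = ydyad alpha f m j.
Proof.
  unfold ydyad; f_equal; rewrite mult_INR; simpl pow; simpl INR.
  field; apply Rgt_not_eq, pow2_gt0.
Qed.

Lemma ydyad_midpoint alpha f m i : (i < 2 ^ m)%nat ->
  ydyad alpha f (S m) (S (2 * i)) =
  (ydyad alpha f m i + ydyad alpha f m (S i)) / 2 + theta alpha f m i * peak m.
Proof.
  intros H; unfold ydyad; rewrite !y_dyadic; cbn [rsum].
  rewrite level_midpoint_fine by auto; f_equal.
  rewrite (rsum_ext _ (fun n => / 2 * level alpha f n (INR i / 2 ^ m) +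
                               / 2 * level alpha f n (INR (S i) / 2 ^ m))),
    rsum_add, !rsum_scal; [lra|].
  intros n Hn; rewrite level_midpoint_coarse; [lra|auto].
Qed.

Definition incr alpha f m j := ydyad alpha f m (S j) - ydyad alpha f m j.

Lemma incr_0 alpha f : incr alpha f 0 0 = 0.
Proof. unfold incr, ydyad; rewrite !y_dyadic; simpl; lra. Qed.

Lemma incr_even alpha f m i : (i < 2 ^ m)%nat ->
  incr alpha f (S m) (2 * i) = incr alpha f m i / 2 + theta alpha f m i * peak m.
Proof. intros H; unfold incr; rewrite ydyad_midpoint, ydyad_double; [lra|auto]. Qed.

Lemma incr_odd alpha f m i : (i < 2 ^ m)%nat ->
  incr alpha f (S m) (S (2 * i)) = incr alpha f m i / 2 - theta alpha f m i * peak m.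
Proof.
  intros H; unfold incr; rewrite ydyad_midpoint by auto.
  replace (S (S (2 * i))) with (2 * S i)%nat by lia; rewrite ydyad_double; lra.
Qed.

Lemma sqrt_pow2_S m : sqrt (2 ^ S m) = sqrt 2 * sqrt (2 ^ m).
Proof. simpl pow; apply sqrt_mult; [lra|left; apply pow2_gt0]. Qed.

Lemma theta_bound_ge0 alpha f B : (forall n k, Rabs (theta alpha f n k) <= B) -> 0 <= B.
Proof. intros HB; specialize (HB O O); pose proof (Rabs_pos (theta alpha f 0 0)); lra. Qed.

(* The induction closes since [3 / 2 + 1 / 2 <= 3 / sqrt 2]. *)
Lemma incr_bound alpha f B : (forall n k, Rabs (theta alpha f n k) <= B) ->
  forall m j, (j < 2 ^ m)%nat -> Rabs (incr alpha f m j) <= 3 * B / sqrt (2 ^ m).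
Proof.
  intros HB; pose proof (theta_bound_ge0 _ _ _ HB) as B0.
  induction m as [|m IH]; intros j Hj.
  { simpl in Hj; replace j with O by lia.
    rewrite incr_0, Rabs_R0; simpl; rewrite sqrt_1; lra. }
  assert (Hp : (2 ^ S m = 2 * 2 ^ m)%nat) by (simpl; lia).
  assert (S2 : sqrt 2 * sqrt 2 = 2) by (apply sqrt_sqrt; lra).
  assert (S2p : 0 < sqrt 2) by (apply sqrt_lt_R0; lra).
  assert (Sp : 0 < sqrt (2 ^ m)) by apply sqrt_lt_R0, pow2_gt0.
  rewrite sqrt_pow2_S.
  set (s := sqrt (2 ^ m)) in *; set (r := sqrt 2) in *.
  assert (Hs : 0 < / s) by (apply Rinv_0_lt_compat; lra).
  assert (Hr : / r >= 2 / 3) by (assert (r * / r = 1) by (field; lra); nra).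
  assert (E : 3 * B / (r * s) = 3 * B * / r * / s) by (field; lra); rewrite E.
  assert (Key : forall d th, Rabs d <= 3 * B / s -> Rabs th <= B ->
            Rabs d / 2 + Rabs th * (/ s * / 2) <= 3 * B * / r * / s).
  { intros d th Hd Hth; unfold Rdiv in *.
    assert (Rabs th * (/ s * / 2) <= B * (/ s * / 2)) by (apply Rmult_le_compat_r; nra).
    assert (0 <= B * / s * (/ r - 2 / 3)) by (apply Rmult_le_pos; nra). nra. }
  destruct (Nat.Even_or_Odd j) as [[i ->]|[i ->]].
  - rewrite incr_even by lia; unfold peak; fold s.
    eapply Rle_trans; [apply Rabs_triang|].
    rewrite Rabs_mult, Rabs_div, (Rabs_right 2), (Rabs_right (/ s * / 2)) by nra.
    apply Key; [apply IH; lia|apply HB].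
  - replace (2 * i + 1)%nat with (S (2 * i)) by lia; rewrite incr_odd by lia; unfold peak; fold s.
    eapply Rle_trans; [apply Rabs_triang|].
    rewrite Rabs_Ropp, Rabs_mult, Rabs_div, (Rabs_right 2), (Rabs_right (/ s * / 2)) by nra.
    apply Key; [apply IH; lia|apply HB].
Qed.

(** * Discrete covariations as sums of increments *)

(* [I] is the number of points of [T_m] in [[0, t]], except that the point [1]
   is not counted: its summand in [covn] vanishes since [dsucc m (2 ^ m)] is
   [dyad m (2 ^ m) = 1]. *)
Definition dyad_index m t I : Prop :=
  (1 <= I <= 2 ^ m)%nat /\ INR (I - 1) <= 2 ^ m * t /\
  ((I < 2 ^ m)%nat -> 2 ^ m * t < INR I).

Lemma dyad_index_ex m t : 0 <= t <= 1 -> exists I, dyad_index m t I.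
Proof.
  intros Ht; assert (H0 : 0 <= 2 ^ m * t) by (pose proof (pow2_gt0 m); nra).
  destruct (nfloor_ex _ H0) as [j [Hj1 Hj2]]; pose proof (pow2_nat_ge1 m).
  exists (Nat.min (S j) (2 ^ m)); split; [lia|split].
  - eapply Rle_trans; [|apply Hj1]; apply le_INR; lia.
  - intros Hlt; replace (Nat.min (S j) (2 ^ m)) with (S j) by lia; rewrite S_INR; lra.
Qed.

Lemma dyad_index_S m t I I' : dyad_index m t I -> dyad_index (S m) t I' ->
  (I' = 2 * I \/ I' = 2 * I - 1)%nat.
Proof.
  intros [H1 [H2 H3]] [H1' [H2' H3']].
  assert (Hp : (2 ^ S m = 2 * 2 ^ m)%nat) by (simpl; lia).
  replace (2 ^ S m) with (2 * 2 ^ m) in H2', H3' by (simpl; lra).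
  rewrite Hp in H1', H3'.
  assert (2 * I - 1 <= I')%nat.
  { destruct (Nat.lt_ge_cases I' (2 * 2 ^ m)) as [L|L]; [|lia].
    specialize (H3' L).
    assert (Hlt : INR (2 * (I - 1)) < INR I') by (rewrite mult_INR; simpl; lra).
    apply INR_lt in Hlt; lia. }
  assert (I' <= 2 * I)%nat.
  { destruct (Nat.lt_ge_cases I (2 ^ m)) as [L|L]; [|lia].
    specialize (H3 L).
    assert (Hlt : INR (I' - 1) < INR (2 * I)) by (rewrite mult_INR; simpl; lra).
    apply INR_lt in Hlt; lia. }
  lia.
Qed.

Lemma dyad_le n k t : dyad n k <= t <-> INR k <= 2 ^ n * t.
Proof.
  unfold dyad; pose proof (pow2_gt0 n).
  replace (INR k) with (2 ^ n * (INR k / 2 ^ n)) at 2 by (field; lra).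
  split; intros H'; [apply Rmult_le_compat_l|apply Rmult_le_reg_l in H']; lra.
Qed.

Lemma dsucc_lt n k : (k < 2 ^ n)%nat -> dsucc n k = INR (S k) / 2 ^ n.
Proof.
  intros H; unfold dsucc; apply Rmin_left; pose proof (pow2_gt0 n).
  apply (Rmult_le_reg_l (2 ^ n)); [lra|].
  replace (2 ^ n * (INR (S k) / 2 ^ n)) with (INR (S k)) by (field; lra).
  rewrite <- INR_pow2, Rmult_1_r; apply le_INR; lia.
Qed.

Lemma dsucc_last n : dsucc n (2 ^ n) = dyad n (2 ^ n).
Proof.
  unfold dsucc, dyad; rewrite INR_pow2; pose proof (pow2_gt0 n).
  replace (2 ^ n / 2 ^ n) with 1 by (field; lra); apply Rmin_right.
  apply (Rmult_le_reg_l (2 ^ n)); [lra|].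
  replace (2 ^ n * (INR (S (2 ^ n)) / 2 ^ n)) with (INR (S (2 ^ n))) by (field; lra).
  rewrite S_INR, INR_pow2; lra.
Qed.

Definition incr_cov alpha f g m I :=
  rsum (fun j => incr alpha f m j * incr alpha g m j) I.

Definition theta_cov alpha f g m I :=
  rsum (fun i => theta alpha f m i * theta alpha g m i) I.

Lemma covn_incr_cov alpha f g n t I : dyad_index n t I ->
  covn n (y alpha f) (y alpha g) t = incr_cov alpha f g n I.
Proof.
  intros [H1 [H2 H3]]; unfold covn; rewrite sum_n_rsum.
  replace (S (2 ^ n)) with (I + (S (2 ^ n) - I))%nat by lia; rewrite rsum_cat.
  rewrite (rsum_ext (fun i => if Rle_dec (dyad n (I + i)) t then _ else _) (fun _ => 0)),
    rsum_const, Rmult_0_r, Rplus_0_r.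
  - apply rsum_ext; intros j Hj; destruct (Rle_dec (dyad n j) t) as [D|D].
    + rewrite dsucc_lt by lia; reflexivity.
    + exfalso; apply D, dyad_le; eapply Rle_trans; [|apply H2]; apply le_INR; lia.
  - intros i Hi; destruct (Rle_dec (dyad n (I + i)) t) as [D|D]; [|reflexivity].
    destruct (Nat.eq_dec (I + i) (2 ^ n)) as [E|E]; [rewrite E, dsucc_last; ring|].
    exfalso; apply dyad_le in D; specialize (H3 ltac:(lia)).
    assert (INR I <= INR (I + i)) by (apply le_INR; lia); lra.
Qed.

(* Each old increment splits into [d/2 + c] and [d/2 - c], so the cross terms
   cancel in the sum of products. *)
Lemma incr_cov_double alpha f g m I : (I <= 2 ^ m)%nat ->
  incr_cov alpha f g (S m) (2 * I) =
  incr_cov alpha f g m I / 2 + theta_cov alpha f g m I / 2 ^ S m.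
Proof.
  intros HI; unfold incr_cov, theta_cov; rewrite rsum_pairs.
  assert (Hc : 2 * peak m * peak m = / 2 ^ S m).
  { unfold peak; pose proof (sqrt_lt_R0 _ (pow2_gt0 m)) as Hs.
    assert (Hss : sqrt (2 ^ m) * sqrt (2 ^ m) = 2 ^ m)
      by (apply sqrt_sqrt; left; apply pow2_gt0).
    set (s := sqrt (2 ^ m)) in *; simpl pow; rewrite <- Hss; field; lra. }
  rewrite (rsum_ext _ (fun i => / 2 * (incr alpha f m i * incr alpha g m i) +
                               / 2 ^ S m * (theta alpha f m i * theta alpha g m i))),
    rsum_add, !rsum_scal; [unfold Rdiv; ring|].
  intros i Hi; rewrite incr_even, incr_odd, incr_even, incr_odd, <- Hc by lia; field.
Qed.

Lemma is_lim_seq_half_step (x b : nat -> R) L :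
  (forall m, x (S m) = x m / 2 + b m) -> is_lim_seq b (L / 2) -> is_lim_seq x L.
Proof.
  intros Hx Hb; apply is_lim_seq_spec in Hb; apply is_lim_seq_spec; intros eps.
  assert (e4 : 0 < eps / 4) by (destruct eps; simpl; lra).
  destruct (Hb (mkposreal _ e4)) as [N HN]; simpl in HN.
  set (z0 := Rabs (x N - L)); assert (0 <= z0) by apply Rabs_pos.
  assert (Hk : forall k, Rabs (x (N + k)%nat - L) <= z0 * (/ 2) ^ k + eps / 2).
  { induction k as [|k IH]; [rewrite Nat.add_0_r; simpl; unfold z0; destruct eps; simpl; lra|].
    rewrite Nat.add_succ_r, Hx; specialize (HN (N + k)%nat ltac:(lia)).
    replace (x (N + k)%nat / 2 + b (N + k)%nat - L)
      with ((x (N + k)%nat - L) / 2 + (b (N + k)%nat - L / 2)) by field.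
    eapply Rle_trans; [apply Rabs_triang|].
    rewrite Rabs_div, (Rabs_right 2) by lra; simpl pow; lra. }
  assert (G : is_lim_seq (fun n => (/ 2) ^ n) 0)
    by (apply is_lim_seq_geom; rewrite Rabs_right; lra).
  apply is_lim_seq_spec in G.
  assert (e2 : 0 < eps / (2 * (z0 + 1))) by (destruct eps; simpl; apply Rdiv_lt_0_compat; lra).
  destruct (G (mkposreal _ e2)) as [K HK]; simpl in HK.
  exists (N + K)%nat; intros n Hn; replace n with (N + (n - N))%nat by lia.
  eapply Rle_lt_trans; [apply Hk|].
  specialize (HK (n - N)%nat ltac:(lia)).
  rewrite Rminus_0_r, Rabs_right in HK by (left; apply pow_lt; lra).
  assert (z0 * (/ 2) ^ (n - N) <= z0 * (eps / (2 * (z0 + 1)))) by (apply Rmult_le_compat_l; lra).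
  assert (z0 * (eps / (2 * (z0 + 1))) < eps / 2).
  { destruct eps as [e ep]; simpl in *.
    replace (z0 * (e / (2 * (z0 + 1)))) with (e / 2 * (z0 / (z0 + 1))) by (field; lra).
    assert (z0 / (z0 + 1) < 1)
      by (apply (Rmult_lt_reg_r (z0 + 1)); [lra|]; field_simplify; lra).
    nra. }
  lra.
Qed.

(* When [I' = 2 I - 1] the last product of increments of level [S m] is
   missing; it is [O(2 ^ -m)] by [incr_bound]. *)
Lemma incr_cov_step alpha f g Bf Bg m t I I' :
  (forall n k, Rabs (theta alpha f n k) <= Bf) ->
  (forall n k, Rabs (theta alpha g n k) <= Bg) ->
  dyad_index m t I -> dyad_index (S m) t I' ->
  Rabs (incr_cov alpha f g (S m) I' - incr_cov alpha f g m I / 2 -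
        theta_cov alpha f g m I / 2 ^ S m) <= 9 * Bf * Bg * (/ 2) ^ S m.
Proof.
  intros Hf Hg HI HI'; pose proof (proj1 HI) as HI1.
  pose proof (theta_bound_ge0 _ _ _ Hf); pose proof (theta_bound_ge0 _ _ _ Hg).
  assert (0 < (/ 2) ^ S m) by (apply pow_lt; lra).
  destruct (dyad_index_S m t I I' HI HI') as [->| ->].
  { rewrite incr_cov_double by lia.
    replace (_ - _ - _) with 0 by ring; rewrite Rabs_R0.
    apply Rmult_le_pos; [nra|lra]. }
  set (j := (2 * I - 1)%nat).
  assert (Hj : (j < 2 ^ S m)%nat) by (unfold j; simpl; lia).
  assert (E : incr_cov alpha f g (S m) (2 * I) =
              incr_cov alpha f g (S m) j + incr alpha f (S m) j * incr alpha g (S m) j)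
    by (unfold incr_cov; replace (2 * I)%nat with (S j) by (unfold j; lia); reflexivity).
  rewrite incr_cov_double in E by lia.
  replace (_ - _ - _) with (- (incr alpha f (S m) j * incr alpha g (S m) j)) by lra.
  rewrite Rabs_Ropp, Rabs_mult.
  assert (Hs : sqrt (2 ^ S m) * sqrt (2 ^ S m) = 2 ^ S m)
    by (apply sqrt_sqrt; left; apply pow2_gt0).
  pose proof (sqrt_lt_R0 _ (pow2_gt0 (S m))) as Hsp; set (s := sqrt (2 ^ S m)) in *.
  rewrite pow_inv, <- Hs.
  eapply Rle_trans; [apply Rmult_le_compat; try apply Rabs_pos;
                     apply incr_bound; eauto|].
  unfold s; right; field; apply Rgt_not_eq, sqrt_lt_R0, pow2_gt0.
Qed.

Lemma covn_limit alpha f g Bf Bg t (L : R) (Im : nat -> nat) :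
  (forall n k, Rabs (theta alpha f n k) <= Bf) ->
  (forall n k, Rabs (theta alpha g n k) <= Bg) ->
  (forall m, dyad_index m t (Im m)) ->
  is_lim_seq (fun m => theta_cov alpha f g m (Im m) / 2 ^ m) L ->
  is_lim_seq (fun m => covn m (y alpha f) (y alpha g) t) L.
Proof.
  intros Hf Hg HI HA.
  apply (is_lim_seq_ext (fun m => incr_cov alpha f g m (Im m)));
    [intros m; symmetry; apply covn_incr_cov, HI|].
  set (x := fun m => incr_cov alpha f g m (Im m)).
  apply (is_lim_seq_half_step x (fun m => x (S m) - x m / 2)); [intros; ring|].
  set (c := fun m => theta_cov alpha f g m (Im m) / 2 ^ m / 2).
  set (e := fun m => 9 * Bf * Bg * (/ 2) ^ S m).
  assert (Hce : forall m, Rabs (x (S m) - x m / 2 - c m) <= e m).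
  { intros m; unfold x, c, e.
    replace (theta_cov alpha f g m (Im m) / 2 ^ m / 2)
      with (theta_cov alpha f g m (Im m) / 2 ^ S m)
      by (simpl pow; field; apply Rgt_not_eq, pow2_gt0).
    now apply (incr_cov_step alpha f g Bf Bg m t). }
  assert (Hc : is_lim_seq c (L / 2)) by (apply (is_lim_seq_scal_r _ (/ 2)) in HA; exact HA).
  assert (He : is_lim_seq e 0).
  { assert (G : is_lim_seq (fun n => (/ 2) ^ n) 0)
      by (apply is_lim_seq_geom; rewrite Rabs_right; lra).
    apply (is_lim_seq_scal_l _ (9 * Bf * Bg)), is_lim_seq_incr_1 in G.
    simpl in G; rewrite Rmult_0_r in G; exact G. }
  apply (is_lim_seq_le_le (fun m => c m - e m) _ (fun m => c m + e m)).
  - intros m; specialize (Hce m); apply Rabs_le_between' in Hce; lra.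
  - replace (L / 2) with (L / 2 - 0) by ring; apply is_lim_seq_minus'; auto.
  - replace (L / 2) with (L / 2 + 0) by ring; apply is_lim_seq_plus'; auto.
Qed.

(** * Equidistribution of an irrational rotation *)

Lemma Int_part_unique x k : IZR k <= x < IZR k + 1 -> Int_part x = k.
Proof.
  intros [H1 H2]; unfold Int_part; rewrite <- (tech_up x (k + 1)); [lia| |];
    rewrite plus_IZR; lra.
Qed.

Lemma mod1_bounds x : 0 <= mod1 x < 1.
Proof. unfold mod1; pose proof (base_Int_part x); lra. Qed.

Lemma mod1_add_int x z : mod1 (x + IZR z) = mod1 x.
Proof.
  unfold mod1; rewrite (Int_part_unique (x + IZR z) (Int_part x + z)), plus_IZR; [ring|].
  pose proof (base_Int_part x); rewrite plus_IZR; lra.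
Qed.

Lemma mod1_id x : 0 <= x < 1 -> mod1 x = x.
Proof. intros H; unfold mod1; rewrite (Int_part_unique x 0); simpl; lra. Qed.

Lemma mod1_neg x : -1 <= x < 0 -> mod1 x = x + 1.
Proof. intros H; rewrite <- (mod1_add_int x 1); apply mod1_id; simpl; lra. Qed.

Lemma mod1_sub_mod1 u v : mod1 (mod1 u - v) = mod1 (u - v).
Proof.
  unfold mod1 at 2.
  replace (u - IZR (Int_part u) - v) with ((u - v) + IZR (- Int_part u)) by (rewrite opp_IZR; ring).
  apply mod1_add_int.
Qed.

Definition orbit alpha i := mod1 (alpha * INR i).

(* The arc [[a, a + l)] of the circle [R/Z]. *)
Definition in_arc a l x : R := if Rlt_dec (mod1 (x - a)) l then 1 else 0.

Definition arc_count alpha N a l := rsum (fun i => in_arc a l (orbit alpha i)) N.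

Lemma in_arc_01 a l x : 0 <= in_arc a l x <= 1.
Proof. unfold in_arc; destruct Rlt_dec; lra. Qed.

Lemma in_arc_add_int a l x z : in_arc (a + IZR z) l x = in_arc a l x.
Proof.
  unfold in_arc.
  replace (x - (a + IZR z)) with ((x - a) + IZR (- z)) by (rewrite opp_IZR; ring).
  now rewrite mod1_add_int.
Qed.

Lemma in_arc_split a l1 l2 x : 0 <= l1 -> 0 <= l2 -> l1 + l2 <= 1 ->
  in_arc a (l1 + l2) x = in_arc a l1 x + in_arc (a + l1) l2 x.
Proof.
  intros H1 H2 H3; unfold in_arc.
  replace (x - (a + l1)) with ((x - a) - l1) by ring; rewrite <- (mod1_sub_mod1 (x - a) l1).
  pose proof (mod1_bounds (x - a)); set (u := mod1 (x - a)) in *.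
  destruct (Rlt_dec u l1).
  - rewrite (mod1_neg (u - l1)) by lra; destruct (Rlt_dec u (l1 + l2)); [|lra].
    destruct (Rlt_dec (u - l1 + 1) l2); lra.
  - rewrite (mod1_id (u - l1)) by lra.
    destruct (Rlt_dec u (l1 + l2)); destruct (Rlt_dec (u - l1) l2); lra.
Qed.

Lemma in_arc_tile a b k x : INR k * b <= 1 -> 0 <= b ->
  in_arc a (INR k * b) x = rsum (fun j => in_arc (a + INR j * b) b x) k.
Proof.
  intros H Hb; induction k as [|k IH].
  - simpl; rewrite Rmult_0_l; unfold in_arc; destruct Rlt_dec; auto.
    pose proof (mod1_bounds (x - a)); lra.
  - rewrite S_INR in *; simpl rsum; rewrite <- IH by nra.
    rewrite Rmult_plus_distr_r, Rmult_1_l; apply in_arc_split; try lra.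
    apply Rmult_le_pos; [apply pos_INR|lra].
Qed.

Lemma arc_count_add_int alpha N a l z : arc_count alpha N (a + IZR z) l = arc_count alpha N a l.
Proof. apply rsum_ext; intros; apply in_arc_add_int. Qed.

(* Rotating the arc by [alpha] shifts the orbit by one step. *)
Lemma arc_count_rotate alpha N a l :
  Rabs (arc_count alpha N (a + alpha) l - arc_count alpha N a l) <= 1.
Proof.
  unfold arc_count; destruct N as [|N]; [simpl; rewrite Rminus_0_r, Rabs_R0; lra|].
  rewrite rsum_Sl, (rsum_ext (fun i => in_arc (a + alpha) l (orbit alpha (S i)))
                            (fun i => in_arc a l (orbit alpha i))).
  - simpl rsum; pose proof (in_arc_01 (a + alpha) l (orbit alpha 0)).
    pose proof (in_arc_01 a l (orbit alpha N)); apply Rabs_le; lra.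
  - intros i _; unfold in_arc, orbit; rewrite !mod1_sub_mod1, S_INR.
    now replace (alpha * (INR i + 1) - (a + alpha)) with (alpha * INR i - a) by ring.
Qed.

Lemma arc_count_rotate_n alpha N a l k :
  Rabs (arc_count alpha N (a + INR k * alpha) l - arc_count alpha N a l) <= INR k.
Proof.
  induction k as [|k IH]; [simpl; rewrite Rmult_0_l, Rplus_0_r, Rminus_diag, Rabs_R0; lra|].
  rewrite S_INR.
  replace (a + (INR k + 1) * alpha) with ((a + INR k * alpha) + alpha) by ring.
  pose proof (arc_count_rotate alpha N (a + INR k * alpha) l) as H.
  apply Rabs_le_between' in H; apply Rabs_le_between' in IH; apply Rabs_le; lra.
Qed.

Lemma arc_count_split alpha N a l1 l2 : 0 <= l1 -> 0 <= l2 -> l1 + l2 <= 1 ->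
  arc_count alpha N a (l1 + l2) = arc_count alpha N a l1 + arc_count alpha N (a + l1) l2.
Proof.
  intros; unfold arc_count; rewrite <- rsum_add; apply rsum_ext; intros; now apply in_arc_split.
Qed.

Lemma arc_count_tile alpha N a b k : INR k * b <= 1 -> 0 <= b ->
  arc_count alpha N a (INR k * b) = rsum (fun j => arc_count alpha N (a + INR j * b) b) k.
Proof.
  intros; unfold arc_count; rewrite rsum_exchange; apply rsum_ext; intros; now apply in_arc_tile.
Qed.

Lemma arc_count_mono alpha N a l l' : l <= l' -> arc_count alpha N a l <= arc_count alpha N a l'.
Proof. intros H; apply rsum_le; intros i _; unfold in_arc; do 2 destruct Rlt_dec; lra. Qed.

Lemma arc_count_ge0 alpha N a l : 0 <= arc_count alpha N a l.
Proof. apply rsum_ge0; intros; apply in_arc_01. Qed.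

Lemma arc_count_full alpha N a : arc_count alpha N a 1 = INR N.
Proof.
  unfold arc_count; rewrite (rsum_ext _ (fun _ => 1)), rsum_const; [ring|].
  intros i _; unfold in_arc; destruct Rlt_dec as [|n]; auto.
  exfalso; apply n, mod1_bounds.
Qed.

Lemma pigeonhole M (b : nat -> nat) : (forall i, (i <= M)%nat -> (b i < M)%nat) ->
  exists i j, (i < j <= M)%nat /\ b i = b j.
Proof.
  revert b; induction M as [|M IH]; intros b Hb; [specialize (Hb O (le_n 0)); lia|].
  destruct (classic (exists i, (i <= M)%nat /\ b i = b (S M))) as [[i [Hi E]]|NE].
  { exists i, (S M); split; [lia|auto]. }
  set (v := b (S M)); assert (Hv : (v < S M)%nat) by (apply Hb; lia).
  assert (Hne : forall i, (i <= M)%nat -> b i <> v) by (intros i Hi E; apply NE; eauto).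
  destruct (IH (fun i => if Nat.ltb (b i) v then b i else (b i - 1)%nat)) as [i [j [Hij E]]].
  - intros i Hi; specialize (Hb i ltac:(lia)); specialize (Hne i Hi).
    destruct (Nat.ltb_spec (b i) v); lia.
  - exists i, j; split; [lia|].
    pose proof (Hne i ltac:(lia)); pose proof (Hne j ltac:(lia)).
    destruct (Nat.ltb_spec (b i) v); destruct (Nat.ltb_spec (b j) v); lia.
Qed.

Lemma orbit_neq0 alpha q : irrational alpha -> (1 <= q)%nat -> orbit alpha q <> 0.
Proof.
  intros Hirr Hq E; apply Hirr; exists (Int_part (alpha * INR q)), (Z.of_nat q).
  split; [lia|]; rewrite <- INR_IZR_INZ; unfold orbit, mod1 in E.
  assert (0 < INR q) by (apply lt_0_INR; lia).
  replace (IZR (Int_part (alpha * INR q))) with (alpha * INR q) by lra; field; lra.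
Qed.

(* Two of the points [orbit alpha i], [i <= M], lie in the same cell [[k/M, (k+1)/M)]. *)
Lemma dirichlet_approx alpha (M : nat) : irrational alpha -> (1 <= M)%nat ->
  exists q, (1 <= q)%nat /\
    (0 < orbit alpha q < / INR M \/ 1 - / INR M < orbit alpha q < 1).
Proof.
  intros Hirr HM; assert (HMr : 1 <= INR M) by (apply (le_INR 1); auto).
  set (b := fun i => Z.to_nat (Int_part (INR M * orbit alpha i))).
  assert (Hb : forall i, IZR (Z.of_nat (b i)) <= INR M * orbit alpha i < IZR (Z.of_nat (b i)) + 1).
  { intros i; unfold b; pose proof (mod1_bounds (alpha * INR i)) as Hx.
    pose proof (base_Int_part (INR M * orbit alpha i)) as Hip.
    assert (Hpos : 0 <= IZR (Int_part (INR M * orbit alpha i))).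
    { assert (Hgt : -1 < IZR (Int_part (INR M * orbit alpha i))) by (unfold orbit in *; nra).
      apply IZR_le; apply lt_IZR in Hgt; lia. }
    rewrite Z2Nat.id by (apply le_IZR; auto); lra. }
  destruct (pigeonhole M b) as [i [j [Hij E]]].
  { intros i Hi; specialize (Hb i); pose proof (mod1_bounds (alpha * INR i)).
    assert (Hlt : IZR (Z.of_nat (b i)) < INR M) by (unfold orbit in *; nra).
    rewrite <- INR_IZR_INZ in Hlt; apply INR_lt; auto. }
  exists (j - i)%nat; split; [lia|].
  pose proof (Hb i) as Bi; pose proof (Hb j) as Bj; rewrite E in Bi.
  assert (Hd : Rabs (orbit alpha j - orbit alpha i) < / INR M)
    by (apply Rabs_def1; apply (Rmult_lt_reg_l (INR M)); try lra; field_simplify; lra).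
  assert (Eq : orbit alpha (j - i) = mod1 (orbit alpha j - orbit alpha i)).
  { unfold orbit; rewrite mod1_sub_mod1, minus_INR by lia.
    replace (alpha * INR j - mod1 (alpha * INR i))
      with ((alpha * (INR j - INR i)) + IZR (Int_part (alpha * INR i))) by (unfold mod1; ring).
    now rewrite mod1_add_int. }
  pose proof (orbit_neq0 alpha (j - i) Hirr ltac:(lia)) as NZ; rewrite Eq in *.
  assert (/ INR M <= 1) by (rewrite <- Rinv_1; apply Rinv_le_contravar; lra).
  apply Rabs_def2 in Hd; destruct (Rle_lt_dec 0 (orbit alpha j - orbit alpha i)).
  - rewrite mod1_id in * by lra; left; lra.
  - rewrite mod1_neg in * by lra; right; lra.
Qed.

Lemma nfloor_div_bounds x b : 0 <= x -> 0 < b ->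
  exists k, INR k * b <= x < (INR k + 1) * b.
Proof.
  intros Hx Hb; destruct (nfloor_ex (x / b)) as [k [Hk1 Hk2]]; [apply Rdiv_le_0_compat; lra|].
  exists k; split.
  - apply (Rmult_le_reg_l (/ b)); [apply Rinv_0_lt_compat; lra|]; field_simplify; lra.
  - apply (Rmult_lt_reg_l (/ b)); [apply Rinv_0_lt_compat; lra|]; field_simplify; lra.
Qed.

(* If [orbit alpha q = 1 - e] with [e] small, then [orbit alpha (q L) = 1 - L e]
   with [L = floor (1 / e)] is small. *)
Lemma orbit_small alpha d : irrational alpha -> 0 < d ->
  exists q, (1 <= q)%nat /\ 0 < orbit alpha q < d.
Proof.
  intros Hirr Hd; destruct (nfloor_div_bounds 1 d) as [M0 [_ HM0]]; [lra|auto|].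
  set (M := S M0); rewrite <- S_INR in HM0; fold M in HM0.
  assert (HMr : 1 <= INR M) by (apply (le_INR 1); unfold M; lia).
  assert (HM : / INR M < d).
  { apply (Rmult_lt_reg_l (INR M)); [lra|]; rewrite Rinv_r by lra; lra. }
  assert (HM1 : / INR M <= 1) by (rewrite <- Rinv_1; apply Rinv_le_contravar; lra).
  destruct (dirichlet_approx alpha M Hirr ltac:(unfold M; lia)) as [q [Hq [C|C]]].
  { exists q; split; auto; lra. }
  set (e := 1 - orbit alpha q); assert (He : 0 < e < / INR M) by (unfold e; lra).
  destruct (nfloor_div_bounds 1 e) as [L [HeL1 HeL2]]; [lra|lra|].
  assert (HL : (1 <= L)%nat) by (destruct L; [simpl in HeL2; lra|lia]).
  exists (q * L)%nat; split; [lia|].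
  assert (Eq : alpha * INR (q * L) =
               - (INR L * e) + IZR (Z.of_nat L * (1 + Int_part (alpha * INR q)))).
  { rewrite mult_INR, mult_IZR, plus_IZR, <- INR_IZR_INZ; unfold e, orbit, mod1; simpl IZR; ring. }
  pose proof (orbit_neq0 alpha (q * L) Hirr ltac:(lia)) as NZ; unfold orbit in *.
  rewrite Eq, mod1_add_int in *.
  assert (INR L * e <> 1).
  { intros E1; apply NZ; rewrite E1.
    replace (Ropp 1) with (0 + IZR (-1)) by (simpl; lra).
    rewrite mod1_add_int, mod1_id; lra. }
  assert (0 < INR L * e) by (assert (1 <= INR L) by (apply (le_INR 1); auto); nra).
  rewrite mod1_neg by lra; split; lra.
Qed.

Lemma arc_count_rotate_orbit alpha N a l q j :
  Rabs (arc_count alpha N (a + INR j * orbit alpha q) l - arc_count alpha N a l) <= INR j * INR q.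
Proof.
  replace (a + INR j * orbit alpha q)
    with ((a + INR (j * q) * alpha) + IZR (- (Z.of_nat j * Int_part (alpha * INR q)))).
  - rewrite arc_count_add_int, <- mult_INR; apply arc_count_rotate_n.
  - rewrite opp_IZR, mult_IZR, <- INR_IZR_INZ, mult_INR; unfold orbit, mod1; ring.
Qed.

(* Cut the arc [[a, a + l)] into [k] arcs of length [b = orbit alpha q] and a
   remainder shorter than [b]; the [j]-th piece is the first one rotated by
   [j q] steps. *)
Lemma arc_count_tiled alpha N a q l k : 0 < orbit alpha q ->
  INR k * orbit alpha q <= l <= 1 -> l < (INR k + 1) * orbit alpha q ->
  let c := arc_count alpha N a (orbit alpha q) in
  INR k * c - INR k * INR k * INR q <= arc_count alpha N a l <=
  INR k * c + INR k * INR k * INR q + c + INR k * INR q.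
Proof.
  intros Hb Hl Hl' c; set (b := orbit alpha q) in *.
  assert (Split : arc_count alpha N a l =
    rsum (fun j => arc_count alpha N (a + INR j * b) b) k +
    arc_count alpha N (a + INR k * b) (l - INR k * b)).
  { rewrite <- arc_count_tile, <- arc_count_split by (pose proof (pos_INR k); nra).
    f_equal; ring. }
  assert (Tiles := rsum_drift (fun j => arc_count alpha N (a + INR j * b) b) c (INR q) k
                     (pos_INR q) (fun j => arc_count_rotate_orbit alpha N a b q j)).
  apply Rabs_le_between' in Tiles.
  assert (Rest : 0 <= arc_count alpha N (a + INR k * b) (l - INR k * b) <= c + INR k * INR q).
  { split; [apply arc_count_ge0|].
    eapply Rle_trans; [apply arc_count_mono with (l' := b); lra|].
    pose proof (arc_count_rotate_orbit alpha N a b q k) as H.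
    apply Rabs_le_between' in H; fold b c in H; lra. }
  lra.
Qed.

(* With [N ~ P c] and [X ~ K c], where [X] counts the arc of length [l] and
   [P b <= 1 < (P + 1) b], [K b <= l < (K + 1) b], we get [X ~ N K / P ~ N l]. *)
Section TilingEstimate.

Variables b P K l N c Q X : R.
Hypotheses (Hb : 0 < b) (Hb2 : b <= / 2) (HP : 1 <= P) (HPb : P * b <= 1)
  (HPb' : 1 < (P + 1) * b) (HK : 0 <= K <= P) (Hl : K * b <= l < (K + 1) * b)
  (HN : 0 <= N) (HQ : 0 <= Q)
  (HN1 : P * c - P * P * Q <= N) (HN2 : N <= P * c + P * P * Q + c + P * Q)
  (HX1 : K * c - K * K * Q <= X) (HX2 : X <= K * c + K * K * Q + c + K * Q).

Lemma tiling_lower : (l - 2 * b) * N - 2 * (P * P + P) * Q <= X.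
Proof.
  assert (L1 : (P + 1) * (l - 2 * b) <= K).
  { destruct (Rle_lt_dec (l - 2 * b) 0); [nra|].
    assert ((P + 1) * b * (l - 2 * b) <= (1 + b) * (l - 2 * b)) by (apply Rmult_le_compat_r; lra).
    assert (Z : (P + 1) * (l - 2 * b) * b < K * b) by nra.
    apply Rmult_lt_reg_r in Z; lra. }
  assert (Lo : (P + 1) * (X + P * P * Q) >= (P + 1) * (l - 2 * b) * N - P * (P * P + P) * Q).
  { assert (K * N >= (P + 1) * (l - 2 * b) * N) by nra.
    assert ((P + 1) * c >= N - (P * P + P) * Q) by nra.
    assert (K * ((P + 1) * c) >= K * (N - (P * P + P) * Q)) by (apply Rmult_ge_compat_l; lra).
    assert (K * (P * P + P) * Q <= P * (P * P + P) * Q)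
      by (apply Rmult_le_compat_r; [lra|]; apply Rmult_le_compat_r; nra).
    assert (K * K * Q <= P * P * Q) by (apply Rmult_le_compat_r; nra).
    nra. }
  assert (P * (P * P + P) * Q <= (P + 1) * ((P * P + P) * Q))
    by (assert (0 <= (P * P + P) * Q) by nra; nra).
  assert (Z : (P + 1) * (X + P * P * Q) >= (P + 1) * ((l - 2 * b) * N - (P * P + P) * Q)) by nra.
  apply Rge_le, Rmult_le_reg_l in Z; [|lra].
  assert (P * P * Q <= (P * P + P) * Q) by nra; lra.
Qed.

Lemma tiling_upper : X <= (l + 4 * b) * N + 2 * (P * P + P) * Q.
Proof.
  assert (L2 : K + 1 <= P * (l + 4 * b)).
  { assert (Z : (K + 1) * b <= P * (l + 4 * b) * b).
    { assert (P * b * (l + 4 * b) >= (1 - b) * (l + 4 * b)) by (apply Rmult_ge_compat_r; nra).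
      nra. }
    apply Rmult_le_reg_r in Z; lra. }
  assert (Up : P * (X - (K * K + K) * Q) <= P * (l + 4 * b) * N + (P + 1) * P * P * Q).
  { assert (P * c <= N + P * P * Q) by lra.
    assert ((K + 1) * (P * c) <= (K + 1) * (N + P * P * Q)) by (apply Rmult_le_compat_l; lra).
    assert ((K + 1) * N <= P * (l + 4 * b) * N) by (apply Rmult_le_compat_r; lra).
    assert ((K + 1) * (P * P * Q) <= (P + 1) * (P * P * Q)) by (apply Rmult_le_compat_r; nra).
    nra. }
  assert (Z : P * (X - (K * K + K) * Q) <= P * ((l + 4 * b) * N + (P + 1) * P * Q)) by nra.
  apply Rmult_le_reg_l in Z; [|lra].
  assert ((K * K + K) * Q <= (P * P + P) * Q) by (apply Rmult_le_compat_r; nra); nra.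
Qed.

End TilingEstimate.

Lemma arc_count_equidistributed alpha : irrational alpha -> forall eps, 0 < eps ->
  exists C, forall N a l, 0 <= l <= 1 ->
  Rabs (arc_count alpha N a l - INR N * l) <= eps * INR N + C.
Proof.
  intros Hirr eps Heps.
  destruct (orbit_small alpha (Rmin (eps / 4) (/ 2)) Hirr) as [q [Hq [Hb1 Hb2]]];
    [apply Rmin_pos; lra|].
  set (b := orbit alpha q) in *.
  pose proof (Rmin_l (eps / 4) (/ 2)) as Hbe; pose proof (Rmin_r (eps / 4) (/ 2)) as Hb12.
  destruct (nfloor_div_bounds 1 b) as [P [HPb1 HPb2]]; [lra|lra|].
  assert (HP : 1 <= INR P) by nra.
  exists (2 * (INR P * INR P + INR P) * INR q); intros N a l Hl.
  destruct (nfloor_div_bounds l b) as [K [HKb1 HKb2]]; [lra|lra|].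
  pose proof (pos_INR K).
  assert (HKP : INR K <= INR P).
  { assert (Hlt : INR K < INR P + 1) by (apply (Rmult_lt_reg_r b); lra).
    rewrite <- S_INR in Hlt; apply INR_lt in Hlt; apply le_INR; lia. }
  pose proof (arc_count_tiled alpha N a q 1 P Hb1 (conj HPb1 (Rle_refl 1)) HPb2) as TN.
  pose proof (arc_count_tiled alpha N a q l K Hb1 (conj HKb1 (proj2 Hl)) HKb2) as TX.
  simpl in TN, TX; fold b in TN, TX; rewrite arc_count_full in TN.
  destruct TN as [TN1 TN2], TX as [TX1 TX2].
  pose proof (arc_count_ge0 alpha N a b); pose proof (pos_INR N); pose proof (pos_INR q).
  assert (Lo : (l - 2 * b) * INR N - 2 * (INR P * INR P + INR P) * INR q <=
               arc_count alpha N a l)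
    by (apply tiling_lower with (P := INR P) (K := INR K) (c := arc_count alpha N a b); lra).
  assert (Up : arc_count alpha N a l <=
               (l + 4 * b) * INR N + 2 * (INR P * INR P + INR P) * INR q)
    by (apply tiling_upper with (P := INR P) (K := INR K) (c := arc_count alpha N a b); lra).
  apply Rabs_le; split; nra.
Qed.

Lemma mkseq_S (f : nat -> R) k :
  seq.mkseq f (S k) = cons (f O) (seq.mkseq (fun i => f (S i)) k).
Proof.
  unfold seq.mkseq; simpl; f_equal.
  generalize O; induction k as [|k IH]; intros s; simpl; [reflexivity|]; f_equal; apply IH.
Qed.

Lemma Riemann_sum_mkseq (h : R -> R) T f m :
  Riemann_sum h (SF_seq_f2 T (seq.mkseq f (S m))) =
  rsum (fun c => (f (S c) - f c) * h (T (f c) (f (S c)))) m.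
Proof.
  revert f; induction m as [|m IH]; intros f; [reflexivity|].
  rewrite mkseq_S, SF_cons_f2 by (rewrite seq.size_mkseq; lia).
  rewrite Riemann_sum_cons, IH, rsum_Sl, mkseq_S; reflexivity.
Qed.

Lemma Riemann_sum_unif (h : R -> R) I : is_RInt h 0 1 I -> forall eps, 0 < eps ->
  exists n, forall T : R -> R -> R, (forall a b, a <= b -> a <= T a b <= b) ->
  Rabs (rsum (fun c => / (INR n + 1) *
          h (T (INR c / (INR n + 1)) (INR (S c) / (INR n + 1)))) (S n) - I) < eps.
Proof.
  intros HI eps Heps.
  destruct (HI (ball I (mkposreal _ Heps)) (locally_ball I _)) as [d Hd].
  destruct (nfloor_ex (/ d)) as [n [Hn1 Hn2]]; [left; apply Rinv_0_lt_compat, cond_pos|].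
  exists n; intros T HT; pose proof (pos_INR n); pose proof (cond_pos d).
  destruct (Riemann_fine_unif_part T 0 1 n HT ltac:(lra)) as [S1 [S2 [S3 S4]]].
  specialize (Hd (SF_seq_f2 T (unif_part 0 1 n))).
  assert (Hstep : seq_step (SF_lx (SF_seq_f2 T (unif_part 0 1 n))) < d).
  { eapply Rle_lt_trans; [apply S1|].
    assert (1 < d * (INR n + 1)) by (assert (d * / d = 1) by (field; lra); nra).
    apply (Rmult_lt_reg_r (INR n + 1)); [lra|]; field_simplify; lra. }
  specialize (Hd Hstep); rewrite Rmin_left, Rmax_right in Hd by lra.
  specialize (Hd (conj S2 (conj S3 S4))).
  unfold ball in Hd; simpl in Hd; unfold AbsRing_ball, abs, minus, plus, opp in Hd; simpl in Hd.
  unfold unif_part in Hd; rewrite Riemann_sum_mkseq, sign_eq_1 in Hd by lra.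
  unfold scal in Hd; simpl in Hd; unfold mult in Hd; simpl in Hd; rewrite Rmult_1_l in Hd.
  rewrite (rsum_ext _ (fun c =>
    (0 + INR (S c) * (1 - 0) / (INR n + 1) - (0 + INR c * (1 - 0) / (INR n + 1))) *
    h (T (0 + INR c * (1 - 0) / (INR n + 1)) (0 + INR (S c) * (1 - 0) / (INR n + 1)))));
    [exact Hd|].
  intros c _; rewrite S_INR; replace (0 + (INR c + 1) * (1 - 0) / (INR n + 1) -
    (0 + INR c * (1 - 0) / (INR n + 1))) with (/ (INR n + 1)) by (field; lra).
  do 3 f_equal; field; lra.
Qed.

Lemma max_tag_ex (h : R -> R) (x : nat -> R) N : exists T : R -> R -> R,
  forall a b, a <= b ->
  a <= T a b <= b /\ forall i, (i < N)%nat -> a <= x i < b -> h (x i) <= h (T a b).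
Proof.
  assert (Ex : forall a b, a <= b -> exists t, a <= t <= b /\
                 forall i, (i < N)%nat -> a <= x i < b -> h (x i) <= h t).
  { intros a b Hab; induction N as [|N [t [Ht1 Ht2]]]; [exists a; split; [lra|lia]|].
    destruct (Rle_dec a (x N)); [destruct (Rlt_dec (x N) b)|];
      [destruct (Rle_dec (h (x N)) (h t))| |].
    all: try (exists (x N); split; [lra|]; intros i Hi Hx;
              destruct (Nat.eq_dec i N) as [->|]; [lra|]; specialize (Ht2 i ltac:(lia) Hx); lra).
    all: exists t; split; auto; intros i Hi Hx;
         destruct (Nat.eq_dec i N) as [->|]; [lra|apply Ht2; auto; lia]. }
  exists (fun a b => match Rle_dec a b with
                     | left H => proj1_sig (constructive_indefinite_description _ (Ex a b H))
                     | right _ => a end).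
  intros a b H; destruct (Rle_dec a b) as [H'|H']; [|contradiction].
  exact (proj2_sig (constructive_indefinite_description _ (Ex a b H'))).
Qed.

Lemma in_arc_cell c K x : 0 <= x < 1 -> 1 <= K -> INR (S c) <= K ->
  in_arc (INR c / K) (/ K) x = 1 -> INR c / K <= x < INR (S c) / K.
Proof.
  intros Hx HK Hc H; unfold in_arc in H; destruct Rlt_dec as [r|r]; [clear H|lra].
  rewrite S_INR in *; pose proof (pos_INR c).
  assert (Hv : K * / K = 1) by (field; lra).
  assert (Hv0 : 0 < / K) by (apply Rinv_0_lt_compat; lra).
  assert (E1 : INR c / K + / K <= 1) by (unfold Rdiv; nra).
  assert (0 <= INR c / K) by (apply Rdiv_le_0_compat; lra).
  replace ((INR c + 1) / K) with (INR c / K + / K) by (field; lra).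
  destruct (Rle_lt_dec 0 (x - INR c / K)).
  - rewrite mod1_id in r by lra; lra.
  - rewrite mod1_neg in r by lra; lra.
Qed.

Lemma in_arc_cells_partition n x : 0 <= x < 1 ->
  rsum (fun c => in_arc (INR c / (INR n + 1)) (/ (INR n + 1)) x) (S n) = 1.
Proof.
  intros Hx; pose proof (pos_INR n).
  replace (S n) with (S n + 0)%nat by lia.
  transitivity (in_arc 0 (INR (S n) * / (INR n + 1)) x).
  - rewrite Nat.add_0_r, in_arc_tile;
      [|rewrite S_INR; right; field; lra|left; apply Rinv_0_lt_compat; lra].
    apply rsum_ext; intros c _; f_equal; unfold Rdiv; ring.
  - unfold in_arc; replace (INR (S n) * / (INR n + 1)) with 1 by (rewrite S_INR; field; lra).
    destruct Rlt_dec as [|Hn]; auto; exfalso; apply Hn, mod1_bounds.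
Qed.

Lemma unif_cell_bounds n c : (c < S n)%nat ->
  0 <= INR c / (INR n + 1) <= INR (S c) / (INR n + 1) /\ INR (S c) / (INR n + 1) <= 1.
Proof.
  intros Hc; pose proof (pos_INR n); pose proof (pos_INR c).
  assert (Hcn : INR (S c) <= INR n + 1) by (rewrite <- S_INR; apply le_INR; lia).
  rewrite S_INR in *; unfold Rdiv.
  assert (0 < / (INR n + 1)) by (apply Rinv_0_lt_compat; lra).
  assert ((INR n + 1) * / (INR n + 1) = 1) by (field; lra).
  repeat split; nra.
Qed.

(* Sorting the orbit points into the cells [[c/K, (c+1)/K)] and bounding [h]
   on each cell by its value at a maximizing tag. *)
Lemma orbit_sum_le_cells alpha (h : R -> R) n N (T : R -> R -> R) :
  (forall a b, a <= b -> forall i, (i < N)%nat -> a <= orbit alpha i < b ->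
     h (orbit alpha i) <= h (T a b)) ->
  rsum (fun i => h (orbit alpha i)) N <=
  rsum (fun c => arc_count alpha N (INR c / (INR n + 1)) (/ (INR n + 1)) *
                 h (T (INR c / (INR n + 1)) (INR (S c) / (INR n + 1)))) (S n).
Proof.
  intros HT; set (K := INR n + 1); pose proof (pos_INR n).
  assert (HK : 1 <= K) by (unfold K; lra).
  assert (Hx : forall i, 0 <= orbit alpha i < 1) by (intros; apply mod1_bounds).
  replace (rsum (fun i => h (orbit alpha i)) N)
    with (rsum (fun c => rsum (fun i => in_arc (INR c / K) (/ K) (orbit alpha i) *
                                        h (orbit alpha i)) N) (S n)).
  2:{ rewrite <- rsum_exchange; apply rsum_ext; intros i _.
      rewrite (rsum_ext _ (fun c => h (orbit alpha i) * in_arc (INR c / K) (/ K) (orbit alpha i)))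
        by (intros; ring).
      rewrite rsum_scal; unfold K; rewrite in_arc_cells_partition by auto; ring. }
  apply rsum_le; intros c Hc; unfold arc_count.
  rewrite Rmult_comm, <- rsum_scal; apply rsum_le; intros i Hi.
  destruct (in_arc_01 (INR c / K) (/ K) (orbit alpha i)) as [Hin0 Hin1].
  destruct (Req_dec (in_arc (INR c / K) (/ K) (orbit alpha i)) 1) as [E|E].
  - rewrite E, Rmult_1_l, Rmult_1_r.
    apply HT; [apply unif_cell_bounds|auto|]; auto.
    apply in_arc_cell; auto; unfold K; rewrite <- S_INR; apply le_INR; lia.
  - replace (in_arc (INR c / K) (/ K) (orbit alpha i)) with 0
      by (unfold in_arc in *; destruct Rlt_dec; lra).
    lra.
Qed.

Lemma mul_le_of_abs_sub (x y v E B : R) : Rabs (x - y) <= E -> Rabs v <= B ->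
  x * v <= y * v + E * B.
Proof.
  intros Hxy Hv; replace (x * v) with (y * v + (x - y) * v) by ring.
  apply Rplus_le_compat_l; eapply Rle_trans; [apply Rle_abs|]; rewrite Rabs_mult.
  apply Rmult_le_compat; auto using Rabs_pos.
Qed.

Lemma orbit_sum_upper alpha (h : R -> R) I B : irrational alpha -> is_RInt h 0 1 I ->
  (forall x, 0 <= x <= 1 -> Rabs (h x) <= B) -> forall eps, 0 < eps ->
  exists C, forall N, rsum (fun i => h (orbit alpha i)) N <= INR N * I + eps * INR N + C.
Proof.
  intros Hirr HI HB eps Heps.
  assert (B0 : 0 <= B) by (specialize (HB 0 ltac:(lra)); pose proof (Rabs_pos (h 0)); lra).
  destruct (Riemann_sum_unif h I HI (eps / 2) ltac:(lra)) as [n Hn].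
  set (K := INR n + 1); assert (HK : 1 <= K) by (unfold K; pose proof (pos_INR n); lra).
  set (d := eps / (2 * (K * B + 1))).
  assert (Hd : 0 < d) by (unfold d; apply Rdiv_lt_0_compat; nra).
  assert (HKd : K * B * d <= eps / 2).
  { unfold d; replace (K * B * (eps / (2 * (K * B + 1)))) with (eps / 2 * (K * B / (K * B + 1)))
      by (field; nra).
    assert (K * B / (K * B + 1) <= 1)
      by (apply (Rmult_le_reg_r (K * B + 1)); [nra|]; field_simplify; nra).
    nra. }
  destruct (arc_count_equidistributed alpha Hirr d Hd) as [C0 HC0].
  exists (K * B * C0); intros N.
  destruct (max_tag_ex h (orbit alpha) N) as [T HT].
  assert (HK' : 0 <= / K <= 1)
    by (split; [left; apply Rinv_0_lt_compat; lra|rewrite <- Rinv_1; apply Rinv_le_contravar; lra]).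
  eapply Rle_trans; [apply (orbit_sum_le_cells alpha h n N T); intros; now apply HT|].
  fold K; eapply Rle_trans.
  { apply rsum_le; intros c Hc.
    destruct (unif_cell_bounds n c Hc) as [Hc1 Hc2]; fold K in Hc1, Hc2.
    apply (mul_le_of_abs_sub _ (INR N * / K)); [apply HC0; auto|].
    destruct (HT _ _ (proj2 Hc1)); apply HB; lra. }
  rewrite rsum_add, rsum_const, S_INR; fold K.
  rewrite (rsum_ext _ (fun c => INR N * (/ K * h (T (INR c / K) (INR (S c) / K)))))
    by (intros; ring).
  rewrite rsum_scal; specialize (Hn T (fun a b H => proj1 (HT a b H))); fold K in Hn.
  apply Rabs_lt_between' in Hn; pose proof (pos_INR N).
  assert (INR N * rsum (fun c => / K * h (T (INR c / K) (INR (S c) / K))) (S n) <=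
          INR N * (I + eps / 2)) by (apply Rmult_le_compat_l; lra).
  assert (K * B * d * INR N <= eps / 2 * INR N) by (apply Rmult_le_compat_r; lra).
  nra.
Qed.

Lemma orbit_sum_equidistributed alpha (h : R -> R) I B : irrational alpha -> is_RInt h 0 1 I ->
  (forall x, 0 <= x <= 1 -> Rabs (h x) <= B) -> forall eps, 0 < eps ->
  exists C, forall N, Rabs (rsum (fun i => h (orbit alpha i)) N - INR N * I) <= eps * INR N + C.
Proof.
  intros Hirr HI HB eps Heps.
  destruct (orbit_sum_upper alpha h I B Hirr HI HB eps Heps) as [C1 H1].
  destruct (orbit_sum_upper alpha (fun x => - h x) (- I) B Hirr (is_RInt_opp h 0 1 I HI))
    with (eps := eps) as [C2 H2]; auto.
  { intros; rewrite Rabs_Ropp; auto. }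
  exists (Rabs C1 + Rabs C2); intros N; specialize (H1 N); specialize (H2 N).
  rewrite rsum_opp in H2; pose proof (Rle_abs C1); pose proof (Rle_abs C2).
  pose proof (Rabs_pos C1); pose proof (Rabs_pos C2).
  apply Rabs_le; lra.
Qed.

(** * Products of Riemann integrable functions *)

(* [s ^ 2] is approximated uniformly on [[-M, M]] by the upper envelope of its
   tangents at the points of a fine grid; such envelopes are integrable
   compositions since [Rmax] is built from [+] and [Rabs]. *)
Definition sq_tangent c s := 2 * c * s - c * c.

Fixpoint tangent_max (c : nat -> R) j s :=
  match j with
  | O => sq_tangent (c O) s
  | S j' => Rmax (tangent_max c j' s) (sq_tangent (c j) s)
  end.

Definition grid M n i := - M + 2 * M * INR i / INR (S n).

Lemma tangent_max_le c j s : tangent_max c j s <= s * s.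
Proof.
  assert (H : forall c, sq_tangent c s <= s * s)
    by (intros c'; unfold sq_tangent; pose proof (pow2_ge_0 (s - c')); nra).
  induction j; simpl; [apply H|apply Rmax_lub; auto].
Qed.

Lemma tangent_max_ge c j s i : (i <= j)%nat -> sq_tangent (c i) s <= tangent_max c j s.
Proof.
  induction j as [|j IH]; intros Hi; [replace i with O by lia; simpl; lra|].
  simpl; destruct (Nat.eq_dec i (S j)) as [->|]; [apply Rmax_r|].
  eapply Rle_trans; [apply IH; lia|apply Rmax_l].
Qed.

Lemma tangent_max_close M n s : 0 < M -> - M <= s <= M ->
  s * s - tangent_max (grid M n) (S n) s <= (2 * M / INR (S n)) ^ 2.
Proof.
  intros HM Hs; pose proof (pos_INR n) as Hn.
  assert (H0 : 0 <= (s + M) * INR (S n) / (2 * M)) by (rewrite S_INR; apply Rdiv_le_0_compat; nra).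
  destruct (nfloor_ex _ H0) as [i [Hi1 Hi2]].
  assert (Hi : (i <= S n)%nat).
  { apply INR_le; eapply Rle_trans; [apply Hi1|].
    apply (Rmult_le_reg_r (2 * M)); [lra|]; rewrite S_INR in *; field_simplify; nra. }
  pose proof (tangent_max_ge (grid M n) (S n) s i Hi) as P.
  set (T := tangent_max (grid M n) (S n) s) in *; unfold sq_tangent, grid in P.
  rewrite S_INR in *; set (c := - M + 2 * M * INR i / (INR n + 1)) in *.
  assert (Hc1 : c <= s).
  { unfold c; assert (2 * M * INR i / (INR n + 1) <= s + M); [|lra].
    apply (Rmult_le_reg_r ((INR n + 1) / (2 * M))); [apply Rdiv_lt_0_compat; lra|].
    replace (2 * M * INR i / (INR n + 1) * ((INR n + 1) / (2 * M))) with (INR i) by (field; lra).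
    unfold Rdiv in *; lra. }
  assert (Hc2 : s < c + 2 * M / (INR n + 1)).
  { unfold c; assert (s + M < 2 * M * (INR i + 1) / (INR n + 1)); [|unfold Rdiv in *; lra].
    apply (Rmult_lt_reg_r ((INR n + 1) / (2 * M))); [apply Rdiv_lt_0_compat; lra|].
    replace (2 * M * (INR i + 1) / (INR n + 1) * ((INR n + 1) / (2 * M)))
      with (INR i + 1) by (field; lra).
    unfold Rdiv in *; lra. }
  assert ((s - c) ^ 2 <= (2 * M / (INR n + 1)) ^ 2) by (simpl; nra).
  replace (s * s - (2 * c * s - c * c)) with ((s - c) ^ 2) in P by ring.
  lra.
Qed.

Lemma Rmax_eq_abs p q : Rmax p q = / 2 * ((p + q) + Rabs (p - q)).
Proof.
  unfold Rmax; destruct Rle_dec; [rewrite Rabs_left1 by lra|rewrite Rabs_right by lra]; field.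
Qed.

Lemma ex_RInt_tangent_max c (w : R -> R) a b : ex_RInt w a b ->
  forall j, ex_RInt (fun x => tangent_max c j (w x)) a b.
Proof.
  intros Hw.
  assert (Htg : forall c, ex_RInt (fun x => sq_tangent c (w x)) a b).
  { intros c'.
    apply (@ex_RInt_ext R_NormedModule (fun x => minus (scal (2 * c') (w x)) (c' * c')));
      [reflexivity|].
    apply (@ex_RInt_minus R_NormedModule);
      [apply (@ex_RInt_scal R_NormedModule w); auto|apply ex_RInt_const]. }
  induction j as [|j IH]; [apply Htg|].
  apply (@ex_RInt_ext R_NormedModule (fun x => scal (/ 2)
    (plus (plus (tangent_max c j (w x)) (sq_tangent (c (S j)) (w x)))
          (norm (minus (tangent_max c j (w x)) (sq_tangent (c (S j)) (w x))))))).
  { intros x _; change (tangent_max c (S j) (w x))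
      with (Rmax (tangent_max c j (w x)) (sq_tangent (c (S j)) (w x))).
    rewrite Rmax_eq_abs; reflexivity. }
  apply (@ex_RInt_scal R_NormedModule), (@ex_RInt_plus R_NormedModule);
    [apply (@ex_RInt_plus R_NormedModule); auto|].
  apply (ex_RInt_norm (fun x => minus (tangent_max c j (w x)) (sq_tangent (c (S j)) (w x)))).
  apply (@ex_RInt_minus R_NormedModule); auto.
Qed.

(* [filterlim_RInt] needs uniform convergence on the whole line, hence the
   global bound on [w]. *)
Lemma ex_RInt_sq_bounded (w : R -> R) M : 0 < M -> (forall x, - M <= w x <= M) ->
  ex_RInt w 0 1 -> ex_RInt (fun x => w x * w x) 0 1.
Proof.
  intros HM HwM Hw.
  set (fn := fun n x => tangent_max (grid M n) (S n) (w x)).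
  assert (Hfn : forall n, is_RInt (fn n) 0 1 (RInt (fn n) 0 1)).
  { intros n; apply (@RInt_correct R_CompleteNormedModule), ex_RInt_tangent_max, Hw. }
  destruct (@filterlim_RInt nat R_CompleteNormedModule fn 0 1 eventually eventually_filter
              (fun x => w x * w x) (fun n => RInt (fn n) 0 1) Hfn) as [If [_ HIf]];
    [|exists If; exact HIf].
  apply filterlim_locally; intros eps.
  destruct (nfloor_ex (4 * M * M / eps)) as [N0 [HN1 HN2]];
    [apply Rdiv_le_0_compat; [nra|apply cond_pos]|].
  exists N0; intros n Hn t.
  change (Rabs (fn n t + - (w t * w t)) < eps); unfold fn.
  pose proof (tangent_max_close M n (w t) HM (HwM t)).
  pose proof (tangent_max_le (grid M n) (S n) (w t)).
  rewrite Rabs_left1 by lra.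
  enough ((2 * M / INR (S n)) ^ 2 < eps) by lra.
  rewrite S_INR; pose proof (pos_INR n); pose proof (cond_pos eps).
  assert (INR N0 <= INR n) by (apply le_INR; auto).
  assert (4 * M * M < eps * (INR n + 1)).
  { apply (Rmult_lt_reg_r (/ eps)); [apply Rinv_0_lt_compat; lra|].
    replace (eps * (INR n + 1) * / eps) with (INR n + 1) by (field; lra).
    unfold Rdiv in HN2; lra. }
  replace ((2 * M / (INR n + 1)) ^ 2) with (4 * M * M / ((INR n + 1) * (INR n + 1)))
    by (field; lra).
  apply (Rmult_lt_reg_r ((INR n + 1) * (INR n + 1))); [nra|].
  replace (4 * M * M / ((INR n + 1) * (INR n + 1)) * ((INR n + 1) * (INR n + 1)))
    with (4 * M * M) by (field; lra).
  nra.
Qed.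

Lemma ex_RInt_sq (w : R -> R) : ex_RInt w 0 1 -> ex_RInt (fun x => w x * w x) 0 1.
Proof.
  intros Hw; destruct (ex_RInt_ub w 0 1 Hw) as [M0 HM0].
  rewrite Rmin_left, Rmax_right in HM0 by lra.
  set (clamp := fun x => Rmax 0 (Rmin x 1)).
  assert (Hclamp : forall x, 0 <= clamp x <= 1)
    by (intros x; unfold clamp, Rmax, Rmin; repeat destruct Rle_dec; lra).
  assert (Hid : forall x, Rmin 0 1 <= x <= Rmax 0 1 -> w (clamp x) = w x).
  { intros x Hx; rewrite Rmin_left, Rmax_right in Hx by lra; f_equal.
    unfold clamp, Rmax, Rmin; repeat destruct Rle_dec; lra. }
  apply (@ex_RInt_ext R_NormedModule (fun x => w (clamp x) * w (clamp x)));
    [intros x Hx; rewrite Hid by lra; reflexivity|].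
  apply (ex_RInt_sq_bounded _ (Rabs M0 + 1)); [pose proof (Rabs_pos M0); lra| |].
  - intros x; specialize (HM0 (clamp x) (Hclamp x)); change (Rabs (w (clamp x)) <= M0) in HM0.
    pose proof (Rle_abs M0); apply Rabs_le_between in HM0; lra.
  - apply (@ex_RInt_ext R_NormedModule w); [intros x Hx; symmetry; apply Hid; lra|exact Hw].
Qed.

Lemma ex_RInt_mult (u v : R -> R) :
  ex_RInt u 0 1 -> ex_RInt v 0 1 -> ex_RInt (fun x => u x * v x) 0 1.
Proof.
  intros Hu Hv.
  assert (H1 := ex_RInt_sq (fun x => u x + v x) (@ex_RInt_plus R_NormedModule _ _ _ _ Hu Hv)).
  assert (H2 := ex_RInt_sq (fun x => u x - v x) (@ex_RInt_minus R_NormedModule _ _ _ _ Hu Hv)).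
  apply (@ex_RInt_ext R_NormedModule (fun x => scal (/ 4)
    (minus ((u x + v x) * (u x + v x)) ((u x - v x) * (u x - v x))))).
  { intros x _; change (/ 4 * ((u x + v x) * (u x + v x) + - ((u x - v x) * (u x - v x))) =
                        u x * v x); field. }
  apply (@ex_RInt_scal R_NormedModule), (@ex_RInt_minus R_NormedModule); auto.
Qed.

Lemma inF_bounded f finf : inF f finf -> exists B, forall n x, 0 <= x <= 1 -> Rabs (f n x) <= B.
Proof.
  intros [H1 [H2 _]]; destruct (H2 1 ltac:(lra)) as [N HN].
  assert (HB0 : exists B0, forall n x, (n <= N)%nat -> 0 <= x <= 1 -> Rabs (f n x) <= B0).
  { clear HN; induction N as [|N [B1 HB1]].
    - destruct (H1 O) as [M HM]; exists M; intros n x Hn Hx; replace n with O by lia; auto.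
    - destruct (H1 (S N)) as [M HM]; exists (Rmax B1 M); intros n x Hn Hx.
      destruct (Nat.eq_dec n (S N)) as [->|].
      + eapply Rle_trans; [apply HM; auto|apply Rmax_r].
      + eapply Rle_trans; [apply HB1; auto; lia|apply Rmax_l]. }
  destruct HB0 as [B0 HB0]; exists (B0 + 2); intros n x Hx.
  destruct (le_lt_dec n N) as [L|L]; [specialize (HB0 n x L Hx); lra|].
  specialize (HB0 N x (le_n N) Hx).
  pose proof (HN n x ltac:(lia) Hx); pose proof (HN N x (le_n N) Hx).
  replace (f n x) with (f N x + (f n x - finf x) - (f N x - finf x)) by ring.
  eapply Rle_trans; [apply Rabs_triang|]; rewrite Rabs_Ropp.
  eapply Rle_trans; [apply Rplus_le_compat_r, Rabs_triang|]; lra.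
Qed.

Lemma theta_bound alpha f B : (forall n x, 0 <= x <= 1 -> Rabs (f n x) <= B) ->
  forall n k, Rabs (theta alpha f n k) <= B.
Proof. intros HB n k; apply HB; pose proof (mod1_bounds (alpha * INR k)); lra. Qed.

Lemma inF_mult_unif f g finf ginf Bf Bg : inF f finf -> inF g ginf ->
  (forall n x, 0 <= x <= 1 -> Rabs (f n x) <= Bf) ->
  (forall n x, 0 <= x <= 1 -> Rabs (g n x) <= Bg) ->
  forall eps, 0 < eps -> exists M0, forall m x, (M0 <= m)%nat -> 0 <= x <= 1 ->
  Rabs (f m x * g m x - finf x * ginf x) <= eps.
Proof.
  intros [_ [Hf _]] [_ [Hg _]] HBf HBg eps Heps.
  assert (Bf0 : 0 <= Bf) by (specialize (HBf O 0 ltac:(lra)); pose proof (Rabs_pos (f O 0)); lra).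
  assert (Bg0 : 0 <= Bg) by (specialize (HBg O 0 ltac:(lra)); pose proof (Rabs_pos (g O 0)); lra).
  set (d := Rmin 1 (eps / (Bf + Bg + 1))).
  assert (Hd : 0 < d) by (unfold d; apply Rmin_pos; [lra|apply Rdiv_lt_0_compat; lra]).
  assert (Hd1 : d <= 1) by apply Rmin_l.
  assert (Hde : d * (Bf + Bg + 1) <= eps).
  { assert (Hde : d <= eps / (Bf + Bg + 1)) by apply Rmin_r.
    apply (Rmult_le_compat_r (Bf + Bg + 1)) in Hde; [|lra].
    unfold Rdiv in Hde; rewrite Rmult_assoc, Rinv_l in Hde; lra. }
  destruct (Hf d Hd) as [N1 HN1]; destruct (Hg d Hd) as [N2 HN2].
  exists (Nat.max N1 N2); intros m x Hm Hx.
  specialize (HN1 m x ltac:(lia) Hx); specialize (HN2 m x ltac:(lia) Hx).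
  specialize (HBf m x Hx); specialize (HBg m x Hx).
  replace (f m x * g m x - finf x * ginf x)
    with ((f m x - finf x) * g m x + finf x * (g m x - ginf x)) by ring.
  eapply Rle_trans; [apply Rabs_triang|]; rewrite !Rabs_mult.
  assert (Hfi : Rabs (finf x) <= Bf + 1).
  { replace (finf x) with (f m x - (f m x - finf x)) by ring.
    eapply Rle_trans; [apply Rabs_triang|]; rewrite Rabs_Ropp; lra. }
  assert (Rabs (f m x - finf x) * Rabs (g m x) <= d * Bg)
    by (apply Rmult_le_compat; try apply Rabs_pos; lra).
  assert (Rabs (finf x) * Rabs (g m x - ginf x) <= (Bf + 1) * d)
    by (apply Rmult_le_compat; try apply Rabs_pos; lra).
  nra.
Qed.

Lemma inF_lin f g finf ginf a b : inF f finf -> inF g ginf ->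
  inF (fun n x => a * f n x + b * g n x) (fun x => a * finf x + b * ginf x).
Proof.
  intros [Hf1 [Hf2 Hf3]] [Hg1 [Hg2 Hg3]]; pose proof (Rabs_pos a); pose proof (Rabs_pos b).
  split; [|split].
  - intros n; destruct (Hf1 n) as [M1 HM1]; destruct (Hg1 n) as [M2 HM2].
    exists (Rabs a * M1 + Rabs b * M2); intros x Hx.
    eapply Rle_trans; [apply Rabs_triang|]; rewrite !Rabs_mult.
    apply Rplus_le_compat; apply Rmult_le_compat_l; auto.
  - intros eps Heps; set (d := eps / (Rabs a + Rabs b + 1)).
    assert (Hd : 0 < d) by (unfold d; apply Rdiv_lt_0_compat; lra).
    assert (Hde : (Rabs a + Rabs b) * d < eps).
    { unfold d; apply (Rmult_lt_reg_r (Rabs a + Rabs b + 1)); [lra|].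
      field_simplify; lra. }
    destruct (Hf2 d Hd) as [N1 HN1]; destruct (Hg2 d Hd) as [N2 HN2].
    exists (Nat.max N1 N2); intros n x Hn Hx.
    specialize (HN1 n x ltac:(lia) Hx); specialize (HN2 n x ltac:(lia) Hx).
    replace (a * f n x + b * g n x - (a * finf x + b * ginf x))
      with (a * (f n x - finf x) + b * (g n x - ginf x)) by ring.
    eapply Rle_lt_trans; [apply Rabs_triang|]; rewrite !Rabs_mult.
    assert (Rabs a * Rabs (f n x - finf x) <= Rabs a * d) by (apply Rmult_le_compat_l; lra).
    assert (Rabs b * Rabs (g n x - ginf x) <= Rabs b * d) by (apply Rmult_le_compat_l; lra).
    lra.
  - apply (@ex_RInt_ext R_NormedModule (fun x => plus (scal a (finf x)) (scal b (ginf x))));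
      [reflexivity|].
    apply (@ex_RInt_plus R_NormedModule); apply (@ex_RInt_scal R_NormedModule); auto.
Qed.

Lemma e00_shift_sum x K : rsum (fun k => e00 (x - INR k)) K <= / 2.
Proof.
  enough (Hs : rsum (fun k => e00 (x - INR k)) K <= Rmax 0 (Rmin (/ 2) (INR K - x)))
    by (revert Hs; unfold Rmax, Rmin; repeat destruct Rle_dec; lra).
  induction K as [|K IH]; simpl rsum; [apply Rmax_l|].
  rewrite S_INR; revert IH; unfold e00, Rmax, Rmin; repeat destruct Rle_dec; intros; lra.
Qed.

Lemma level_bound alpha f B t : (forall n k, Rabs (theta alpha f n k) <= B) ->
  forall n, Rabs (level alpha f n t) <= B * (/ sqrt 2) ^ n.
Proof.
  intros HB n; pose proof (theta_bound_ge0 _ _ _ HB) as B0.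
  assert (Hs : sqrt (2 ^ n) = sqrt 2 ^ n).
  { induction n as [|n IH]; [apply sqrt_1|]; rewrite sqrt_pow2_S, IH; reflexivity. }
  assert (Hs0 : 0 < / sqrt 2 ^ n) by (apply Rinv_0_lt_compat, pow_lt, sqrt_lt_R0; lra).
  rewrite level_rsum, pow_inv; eapply Rle_trans; [apply rsum_abs|].
  eapply Rle_trans.
  { apply (rsum_le _ (fun k => B * / sqrt 2 ^ n * e00 (2 ^ n * t - INR k))).
    intros k _; unfold ef; rewrite !Rabs_mult, Hs, (Rabs_right (/ sqrt 2 ^ n)) by lra.
    rewrite (Rabs_right (e00 _)) by (apply Rle_ge, e00_ge0).
    pose proof (e00_ge0 (2 ^ n * t - INR k)); specialize (HB n k).
    rewrite <- Rmult_assoc; apply Rmult_le_compat_r; [lra|]; apply Rmult_le_compat_r; lra. }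
  rewrite rsum_scal; pose proof (e00_shift_sum (2 ^ n * t) (2 ^ n)).
  assert (0 <= rsum (fun k => e00 (2 ^ n * t - INR k)) (2 ^ n))
    by (apply rsum_ge0; intros; apply e00_ge0).
  assert (B * / sqrt 2 ^ n * rsum (fun k => e00 (2 ^ n * t - INR k)) (2 ^ n) <=
          B * / sqrt 2 ^ n * / 2) by (apply Rmult_le_compat_l; nra).
  nra.
Qed.

Lemma ex_series_level alpha f B t : (forall n k, Rabs (theta alpha f n k) <= B) ->
  ex_series (fun n => level alpha f n t).
Proof.
  intros HB.
  apply (@ex_series_le R_AbsRing R_CompleteNormedModule _ (fun n => B * (/ sqrt 2) ^ n)).
  - intros n; apply level_bound; auto.
  - apply (@ex_series_scal_l R_AbsRing R_NormedModule B (fun n => (/ sqrt 2) ^ n)).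
    apply ex_series_geom.
    assert (S2 : sqrt 2 * sqrt 2 = 2) by (apply sqrt_sqrt; lra).
    assert (1 < sqrt 2) by (pose proof (sqrt_lt_R0 2 ltac:(lra)); nra).
    rewrite Rabs_right by (left; apply Rinv_0_lt_compat; lra).
    rewrite <- Rinv_1; apply Rinv_lt_contravar; lra.
Qed.

Lemma y_lin alpha f g Bf Bg a b t :
  (forall n k, Rabs (theta alpha f n k) <= Bf) -> (forall n k, Rabs (theta alpha g n k) <= Bg) ->
  y alpha (fun n x => a * f n x + b * g n x) t = a * y alpha f t + b * y alpha g t.
Proof.
  intros Hf Hg; unfold y.
  change (Series (fun n => level alpha (fun n x => a * f n x + b * g n x) n t) =
          a * Series (fun n => level alpha f n t) + b * Series (fun n => level alpha g n t)).
  rewrite (Series_ext _ (fun n => a * level alpha f n t + b * level alpha g n t)),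
    Series_plus, !Series_scal_l; [reflexivity| | |].
  - apply (@ex_series_scal_l R_AbsRing R_NormedModule a), (ex_series_level _ _ Bf); auto.
  - apply (@ex_series_scal_l R_AbsRing R_NormedModule b), (ex_series_level _ _ Bg); auto.
  - intros n; rewrite !level_rsum, <- !rsum_scal, <- rsum_add.
    apply rsum_ext; intros k _; unfold theta; ring.
Qed.

Lemma dyad_index_seq t : 0 <= t <= 1 -> exists Im : nat -> nat, forall m, dyad_index m t (Im m).
Proof.
  intros Ht.
  exists (fun m => proj1_sig (constructive_indefinite_description _ (dyad_index_ex m t Ht))).
  intros m; exact (proj2_sig (constructive_indefinite_description _ (dyad_index_ex m t Ht))).
Qed.

Lemma dyad_index_close m t I : t <= 1 -> dyad_index m t I ->
  INR I <= 2 ^ m /\ Rabs (INR I - 2 ^ m * t) <= 1.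
Proof.
  intros Ht [H1 [H2 H3]]; rewrite minus_INR in H2 by lia; simpl INR in H2.
  assert (HI : INR I <= 2 ^ m) by (rewrite <- INR_pow2; apply le_INR; lia).
  split; [exact HI|]; apply Rabs_le; split; [|lra].
  destruct (Nat.lt_ge_cases I (2 ^ m)) as [L|L]; [specialize (H3 L); lra|].
  assert (INR I = 2 ^ m) by (rewrite <- INR_pow2; f_equal; lia).
  pose proof (pow2_gt0 m); nra.
Qed.

Lemma orbit_sum_dyadic_limit alpha h L B t (Im : nat -> nat) :
  irrational alpha -> is_RInt h 0 1 L -> (forall x, 0 <= x <= 1 -> Rabs (h x) <= B) ->
  t <= 1 -> (forall m, dyad_index m t (Im m)) ->
  is_lim_seq (fun m => rsum (fun i => h (orbit alpha i)) (Im m) / 2 ^ m) (t * L).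
Proof.
  intros Hirr HL HB Ht HI; apply is_lim_seq_spec; intros eps.
  set (e := eps / 2); assert (He : 0 < e) by (unfold e; destruct eps; simpl; lra).
  destruct (orbit_sum_equidistributed alpha h L B Hirr HL HB e He) as [C HC].
  set (K := Rabs C + Rabs L + 1); assert (HK : 0 < K) by (unfold K; pose proof (Rabs_pos C);
    pose proof (Rabs_pos L); lra).
  assert (G : is_lim_seq (fun n => (/ 2) ^ n) 0)
    by (apply is_lim_seq_geom; rewrite Rabs_right; lra).
  apply is_lim_seq_spec in G.
  destruct (G (mkposreal (e / K) (Rdiv_lt_0_compat _ _ He HK))) as [M HM].
  exists M; intros m Hm; specialize (HM m Hm); simpl in HM.
  rewrite Rminus_0_r, Rabs_right, pow_inv in HM by (left; apply pow_lt; lra).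
  destruct (dyad_index_close m t (Im m) Ht (HI m)) as [HIp HIt].
  specialize (HC (Im m)); set (p := 2 ^ m) in *; set (I := Im m) in *.
  assert (Hp : 0 < p) by apply pow2_gt0.
  assert (Main : Rabs (rsum (fun i => h (orbit alpha i)) I - t * L * p) <= e * p + K - 1).
  { replace (rsum (fun i => h (orbit alpha i)) I - t * L * p)
      with ((rsum (fun i => h (orbit alpha i)) I - INR I * L) + L * (INR I - p * t)) by ring.
    eapply Rle_trans; [apply Rabs_triang|]; rewrite Rabs_mult.
    assert (Rabs L * Rabs (INR I - p * t) <= Rabs L) by (pose proof (Rabs_pos L); nra).
    assert (e * INR I <= e * p) by (apply Rmult_le_compat_l; lra).
    pose proof (Rle_abs C); unfold K; lra. }
  replace (rsum (fun i => h (orbit alpha i)) I / p - t * L)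
    with ((rsum (fun i => h (orbit alpha i)) I - t * L * p) / p) by (field; lra).
  rewrite Rabs_div, (Rabs_right p) by lra.
  apply (Rmult_lt_reg_r p); [lra|]; unfold Rdiv; rewrite Rmult_assoc, Rinv_l, Rmult_1_r by lra.
  assert (K < e * p).
  { apply (Rmult_lt_compat_r (p * K)) in HM; [|nra].
    replace (/ p * (p * K)) with K in HM by (field; lra).
    replace (e / K * (p * K)) with (e * p) in HM by (field; lra); lra. }
  unfold e in *; destruct eps; simpl in *; nra.
Qed.

Lemma theta_cov_orbit_sum alpha f g finf ginf (Im : nat -> nat) :
  inF f finf -> inF g ginf -> (forall m, (Im m <= 2 ^ m)%nat) ->
  is_lim_seq (fun m => (theta_cov alpha f g m (Im m) -
                        rsum (fun i => finf (orbit alpha i) * ginf (orbit alpha i)) (Im m)) /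
                       2 ^ m) 0.
Proof.
  intros HF HG HI; apply is_lim_seq_spec; intros eps.
  destruct (inF_bounded f finf HF) as [Bf HBf]; destruct (inF_bounded g ginf HG) as [Bg HBg].
  set (e := eps / 2); assert (He : 0 < e) by (unfold e; destruct eps; simpl; lra).
  destruct (inF_mult_unif f g finf ginf Bf Bg HF HG HBf HBg e He) as [M0 HM0].
  exists M0; intros m Hm; rewrite Rminus_0_r; pose proof (pow2_gt0 m).
  assert (HIp : INR (Im m) <= 2 ^ m) by (rewrite <- INR_pow2; apply le_INR, HI).
  assert (D : Rabs (theta_cov alpha f g m (Im m) -
                    rsum (fun i => finf (orbit alpha i) * ginf (orbit alpha i)) (Im m))
              <= e * INR (Im m)).
  { unfold theta_cov, Rminus; rewrite <- rsum_opp, <- rsum_add.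
    eapply Rle_trans; [apply rsum_abs|]; rewrite Rmult_comm, <- rsum_const.
    apply rsum_le; intros i _; apply HM0; [lia|].
    pose proof (mod1_bounds (alpha * INR i)); unfold orbit; lra. }
  rewrite Rabs_div, (Rabs_right (2 ^ m)) by lra.
  apply (Rmult_lt_reg_r (2 ^ m)); [lra|]; unfold Rdiv; rewrite Rmult_assoc, Rinv_l by lra.
  assert (e * INR (Im m) <= e * 2 ^ m) by (apply Rmult_le_compat_l; lra).
  unfold e in *; destruct eps; simpl in *; nra.
Qed.

Theorem covariation_linear alpha f g finf ginf t : irrational alpha ->
  inF f finf -> inF g ginf -> 0 <= t <= 1 ->
  is_lim_seq (fun n => covn n (y alpha f) (y alpha g) t)
             (t * RInt (fun s => finf s * ginf s) 0 1).
Proof.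
  intros Hirr HF HG Ht.
  destruct (inF_bounded f finf HF) as [Bf HBf]; destruct (inF_bounded g ginf HG) as [Bg HBg].
  set (h := fun s => finf s * ginf s).
  assert (Hh : ex_RInt h 0 1) by (apply ex_RInt_mult; [apply HF|apply HG]).
  destruct (ex_RInt_ub h 0 1 Hh) as [Bh HBh]; rewrite Rmin_left, Rmax_right in HBh by lra.
  destruct (dyad_index_seq t Ht) as [Im HI].
  apply (covn_limit alpha f g Bf Bg t _ Im (theta_bound _ _ _ HBf) (theta_bound _ _ _ HBg) HI).
  apply (is_lim_seq_ext (fun m => (theta_cov alpha f g m (Im m) -
                                   rsum (fun i => h (orbit alpha i)) (Im m)) / 2 ^ m +
                                  rsum (fun i => h (orbit alpha i)) (Im m) / 2 ^ m));
    [intros m; field; apply Rgt_not_eq, pow2_gt0|].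
  replace (t * RInt h 0 1) with (0 + t * RInt h 0 1) by ring.
  apply is_lim_seq_plus'.
  - apply theta_cov_orbit_sum; auto; intros m; apply (proj1 (HI m)).
  - apply (orbit_sum_dyadic_limit alpha h _ Bh); try easy.
    apply (@RInt_correct R_CompleteNormedModule), Hh.
Qed.

Theorem proposition2p6 (alpha : R) (Halpha : 0 < alpha) (Hirr : irrational alpha) :
  (* (a) linear quadratic variation *)
  (forall (f : nat -> R -> R) (finf : R -> R), inF f finf ->
     forall t, 0 <= t <= 1 ->
       is_lim_seq (fun n => covn n (y alpha f) (y alpha f) t)
                  (t * RInt (fun s => finf s ^ 2) 0 1)) /\
  (* (b) linear covariation *)
  (forall (f g : nat -> R -> R) (finf ginf : R -> R), inF f finf -> inF g ginf ->
     forall t, 0 <= t <= 1 ->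
       is_lim_seq (fun n => covn n (y alpha f) (y alpha g) t)
                  (t * RInt (fun s => finf s * ginf s) 0 1)) /\
  (* vector space: F is closed under linear combinations and f |-> y_alpha^f is linear *)
  (forall (f g : nat -> R -> R) (finf ginf : R -> R) (a b : R),
     inF f finf -> inF g ginf ->
     inF (fun n x => a * f n x + b * g n x) (fun x => a * finf x + b * ginf x) /\
     forall t, 0 <= t <= 1 ->
       y alpha (fun n x => a * f n x + b * g n x) t = a * y alpha f t + b * y alpha g t).
Proof.
  split; [|split].
  - intros f finf HF t Ht.
    rewrite (@RInt_ext R_CompleteNormedModule (fun s => finf s ^ 2) (fun s => finf s * finf s))
      by (intros; simpl; ring).
    now apply covariation_linear.
  - intros; now apply covariation_linear.
  - intros f g finf ginf a b HF HG; split; [now apply inF_lin|intros t _].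
    destruct (inF_bounded f finf HF) as [Bf HBf]; destruct (inF_bounded g ginf HG) as [Bg HBg].
    apply (y_lin alpha f g Bf Bg); now apply theta_bound.
Qed.
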